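(* For any based spaces $(X,x_0)$ and $(Y,y_0)$, the homomorphism $\phi:\pi_1^{\tau}(X\times Y,(x_0,y_0))\to\pi_1^{\tau}(X,x_0)\times\pi_1^{\tau}(Y,y_0)$ induced by the two projections, $\phi([(\alpha,\beta)])=([\alpha],[\beta])$, is a natural isomorphism of topological groups (the target carrying the product topology).
   Context: $\Omega(Z,z)$ is the loop space with the compact-open topology; $\pi_1^{qtop}(Z,z)$ is $\pi_1(Z,z)$ with the quotient topology via $\alpha\mapsto[\alpha]$. $F_M(S)$ is the free (Markov) topological group on a space $S$. For a group with topology $G$, $\tau(G)$ is $G$ with the quotient topology with respect to the multiplication epimorphism $m_G:F_M(G)\to G$ (generator $g\mapsto g$). $\pi_1^{\tau}=\tau\circ\pi_1^{qtop}$. *)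

From Stdlib Require Import Reals Lra List Relations ClassicalEpsilon.
Open Scope R_scope.

Definition is_topology {X : Type} (O : (X -> Prop) -> Prop) : Prop :=
  O (fun _ => True) /\ O (fun _ => False) /\
  (forall U V, O U -> O V -> O (fun x => U x /\ V x)) /\
  (forall F : (X -> Prop) -> Prop, (forall U, F U -> O U) ->
     O (fun x => exists U, F U /\ U x)).

Definition continuous {X Y : Type} (OX : (X -> Prop) -> Prop)
  (OY : (Y -> Prop) -> Prop) (f : X -> Y) : Prop :=
  forall V, OY V -> OX (fun x => V (f x)).

Definition prod_open {X Y : Type} (OX : (X -> Prop) -> Prop)
  (OY : (Y -> Prop) -> Prop) (W : X * Y -> Prop) : Prop :=
  forall p, W p -> exists A B, OX A /\ OY B /\ A (fst p) /\ B (snd p) /\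
    (forall q, A (fst q) -> B (snd q) -> W q).

Definition generated {X : Type} (B : (X -> Prop) -> Prop) (U : X -> Prop) : Prop :=
  forall x, U x -> exists l : list (X -> Prop),
    (forall V, In V l -> B V) /\ (forall V, In V l -> V x) /\
    (forall y, (forall V, In V l -> V y) -> U y).

Definition compact {X : Type} (O : (X -> Prop) -> Prop) (K : X -> Prop) : Prop :=
  forall F : (X -> Prop) -> Prop, (forall U, F U -> O U) ->
    (forall x, K x -> exists U, F U /\ U x) ->
    exists l, (forall U, In U l -> F U) /\ (forall x, K x -> exists U, In U l /\ U x).

Definition R_open (U : R -> Prop) : Prop :=
  forall x, U x -> exists eps, 0 < eps /\ forall y, Rabs (y - x) < eps -> U y.

Definition I := {t : R | 0 <= t <= 1}.
Definition I_open (U : I -> Prop) : Prop :=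
  exists V, R_open V /\ forall t : I, U t <-> V (proj1_sig t).

Lemma I0_pf : 0 <= 0 <= 1. Proof. lra. Qed.
Lemma I1_pf : 0 <= 1 <= 1. Proof. lra. Qed.
Definition I0 : I := exist _ 0 I0_pf.
Definition I1 : I := exist _ 1 I1_pf.

Lemma clamp_pf (r : R) : 0 <= Rmax 0 (Rmin 1 r) <= 1.
Proof.
  split; [apply Rmax_l|]. apply Rmax_lub; [lra|apply Rmin_l].
Qed.
Definition clampI (r : R) : I := exist _ _ (clamp_pf r).

Lemma rev_pf (t : I) : 0 <= 1 - proj1_sig t <= 1.
Proof. destruct t as [t Ht]; simpl; lra. Qed.
Definition revI (t : I) : I := exist _ _ (rev_pf t).

Definition concat_fun {X : Type} (a b : I -> X) (t : I) : X :=
  if Rle_dec (proj1_sig t) (1/2) then a (clampI (2 * proj1_sig t))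
  else b (clampI (2 * proj1_sig t - 1)).

Definition is_loop {X : Type} (OX : (X -> Prop) -> Prop) (x0 : X) (a : I -> X) : Prop :=
  continuous I_open OX a /\ a I0 = x0 /\ a I1 = x0.

Definition Omega {X : Type} (OX : (X -> Prop) -> Prop) (x0 : X) :=
  {a : I -> X | is_loop OX x0 a}.

Definition Omega_open {X : Type} (OX : (X -> Prop) -> Prop) (x0 : X)
  : (Omega OX x0 -> Prop) -> Prop :=
  generated (fun W => exists K U, compact I_open K /\ OX U /\
     forall a : Omega OX x0, W a <-> (forall t, K t -> U (proj1_sig a t))).

Definition homotopic {X : Type} (OX : (X -> Prop) -> Prop) (x0 : X) (a b : I -> X) : Prop :=
  exists H : I * I -> X, continuous (prod_open I_open I_open) OX H /\
    (forall s, H (s, I0) = a s) /\ (forall s, H (s, I1) = b s) /\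
    (forall t, H (I0, t) = x0 /\ H (I1, t) = x0).

Definition pi1 {X : Type} (OX : (X -> Prop) -> Prop) (x0 : X) :=
  {C : Omega OX x0 -> Prop | exists a : Omega OX x0,
     forall b, C b <-> homotopic OX x0 (proj1_sig a) (proj1_sig b)}.

Definition cls {X : Type} {OX : (X -> Prop) -> Prop} {x0 : X} (a : Omega OX x0)
  : pi1 OX x0 :=
  exist _ (fun b => homotopic OX x0 (proj1_sig a) (proj1_sig b))
        (ex_intro _ a (fun b => iff_refl _)).

Definition pi1_qtop_open {X : Type} (OX : (X -> Prop) -> Prop) (x0 : X)
  (V : pi1 OX x0 -> Prop) : Prop :=
  Omega_open OX x0 (fun a => V (cls a)).

Lemma const_loop_pf {X : Type} (OX : (X -> Prop) -> Prop) (x0 : X) :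
  is_loop OX x0 (fun _ => x0).
Proof.
  split; [|split; reflexivity].
  intros V _. exists (fun _ => V x0). split.
  - intros x Hx. exists 1. split; [lra|]. intros; exact Hx.
  - intros t; simpl; tauto.
Qed.
Definition const_loop {X : Type} (OX : (X -> Prop) -> Prop) (x0 : X) : Omega OX x0 :=
  exist _ _ (const_loop_pf OX x0).

(* group operations: the class of the constant loop, of the concatenation,
   and of the reversed loop (chosen by Hilbert's epsilon, which picks the
   unique class satisfying the defining property) *)
Definition pi1_one {X : Type} (OX : (X -> Prop) -> Prop) (x0 : X) : pi1 OX x0 :=
  cls (const_loop OX x0).

Definition pi1_mul {X : Type} (OX : (X -> Prop) -> Prop) (x0 : X)
  (C D : pi1 OX x0) : pi1 OX x0 :=
  epsilon (inhabits (pi1_one OX x0)) (fun E => exists a b c,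
    proj1_sig C a /\ proj1_sig D b /\ proj1_sig E c /\
    forall t, proj1_sig c t = concat_fun (proj1_sig a) (proj1_sig b) t).

Definition pi1_inv {X : Type} (OX : (X -> Prop) -> Prop) (x0 : X)
  (C : pi1 OX x0) : pi1 OX x0 :=
  epsilon (inhabits (pi1_one OX x0)) (fun E => exists a c,
    proj1_sig C a /\ proj1_sig E c /\
    forall t, proj1_sig c t = proj1_sig a (revI t)).

Definition pi1_map {X X' : Type} (OX : (X -> Prop) -> Prop) (x0 : X)
  (OX' : (X' -> Prop) -> Prop) (x0' : X') (f : X -> X') (C : pi1 OX x0) : pi1 OX' x0' :=
  epsilon (inhabits (pi1_one OX' x0')) (fun E => exists a b,
    proj1_sig C a /\ proj1_sig E b /\ forall t, proj1_sig b t = f (proj1_sig a t)).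

Definition word (S : Type) := list (bool * S).   (* (true,s) = s, (false,s) = s^-1 *)

Definition fstep (S : Type) : relation (word S) := fun u v =>
  exists w1 w2 b s, u = w1 ++ (b, s) :: (negb b, s) :: w2 /\ v = w1 ++ w2.

Definition fequiv (S : Type) : relation (word S) := clos_refl_sym_trans _ (fstep S).

Definition FG (S : Type) :=
  {C : word S -> Prop | exists w : word S, forall v, C v <-> fequiv S w v}.

Definition fcls {S : Type} (w : word S) : FG S :=
  exist _ (fun v => fequiv S w v) (ex_intro _ w (fun v => iff_refl _)).

Definition frep {S : Type} (C : FG S) : word S :=
  proj1_sig (constructive_indefinite_description _ (proj2_sig C)).

Definition word_inv {S : Type} (w : word S) : word S :=
  rev (map (fun p => (negb (fst p), snd p)) w).

Definition fmul {S : Type} (C D : FG S) : FG S := fcls (frep C ++ frep D).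
Definition finv {S : Type} (C : FG S) : FG S := fcls (word_inv (frep C)).
Definition fgen {S : Type} (s : S) : FG S := fcls ((true, s) :: nil).

Definition is_group_topology {S : Type} (T : (FG S -> Prop) -> Prop) : Prop :=
  is_topology T /\
  continuous (prod_open T T) T (fun p => fmul (fst p) (snd p)) /\
  continuous T T (@finv S).

(* F_M(S): the finest group topology on F(S) making the generator map
   continuous = topology generated by all such group topologies *)
Definition FM_open {S : Type} (OS : (S -> Prop) -> Prop) : (FG S -> Prop) -> Prop :=
  generated (fun V => exists T, is_group_topology T /\ continuous OS T (@fgen S) /\ T V).

Definition word_eval {G : Type} (mul : G -> G -> G) (inv : G -> G) (one : G)
  (w : word G) : G :=
  fold_right (fun (p : bool * G) (acc : G) => mul (if fst p then snd p else inv (snd p)) acc) one w.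

Definition mG {G : Type} (mul : G -> G -> G) (inv : G -> G) (one : G) (C : FG G) : G :=
  word_eval mul inv one (frep C).

Definition tau_open {G : Type} (OG : (G -> Prop) -> Prop) (mul : G -> G -> G)
  (inv : G -> G) (one : G) (V : G -> Prop) : Prop :=
  FM_open OG (fun C => V (mG mul inv one C)).

Definition pi1_tau_open {X : Type} (OX : (X -> Prop) -> Prop) (x0 : X)
  : (pi1 OX x0 -> Prop) -> Prop :=
  tau_open (pi1_qtop_open OX x0) (pi1_mul OX x0) (pi1_inv OX x0) (pi1_one OX x0).

Definition phi {X Y : Type} (OX : (X -> Prop) -> Prop) (x0 : X)
  (OY : (Y -> Prop) -> Prop) (y0 : Y)
  (C : pi1 (prod_open OX OY) (x0, y0)) : pi1 OX x0 * pi1 OY y0 :=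
  (pi1_map (prod_open OX OY) (x0, y0) OX x0 (@fst X Y) C,
   pi1_map (prod_open OX OY) (x0, y0) OY y0 (@snd X Y) C).

(* The inverse of [phi] is [(x, y) |-> i1(x) * i2(y)], built from the inclusions
   of the two factors; bijectivity holds because loops and homotopies in [X * Y]
   are exactly pairs of loops and homotopies.  [phi] is continuous because
   [pi1_tau] is functorial for its components, the maps induced by the projections.
   For the inverse, [tau(G)] is a quotient of the free topological group [F_M(G)],
   whose multiplication is continuous, and [m_G : F_M(G) -> tau(G)] is an open
   map; so [i1(x) * i2(y)] lifts to a continuous map [F_M * F_M -> F_M], and
   open boxes upstairs descend to open boxes in the product of the tau-topologies. *)

From Stdlib Require Import Reals Lra List Relations ClassicalEpsilon
  FunctionalExtensionality PropExtensionality ProofIrrelevance.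
Open Scope R_scope.

Lemma pred_ext {A : Type} (P Q : A -> Prop) : (forall x, P x <-> Q x) -> P = Q.
Proof.
  intros H. apply functional_extensionality; intros x.
  apply propositional_extensionality; apply H.
Qed.

(** * General topology *)

Lemma continuous_comp {A B C : Type} (OA : (A -> Prop) -> Prop) (OB : (B -> Prop) -> Prop)
  (OC : (C -> Prop) -> Prop) (f : A -> B) (g : B -> C) :
  continuous OA OB f -> continuous OB OC g -> continuous OA OC (fun x => g (f x)).
Proof. intros Hf Hg V HV. apply (Hf _ (Hg V HV)). Qed.

Lemma open_local {Z : Type} (O : (Z -> Prop) -> Prop) (S : Z -> Prop) :
  is_topology O -> (forall x, S x -> exists A, O A /\ A x /\ forall y, A y -> S y) -> O S.
Proof.
  intros [_ [_ [_ HU]]] H.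
  assert (E : S = (fun x => exists A, (O A /\ forall y, A y -> S y) /\ A x)).
  { apply pred_ext; intros x; split.
    - intros Sx. destruct (H x Sx) as [A [HA [Ax HAS]]]. exists A; auto.
    - intros [A [[_ HAS] Ax]]; auto. }
  rewrite E. apply HU. intros A [HA _]; auto.
Qed.

Lemma preimage_is_topology {Z Z' : Type} (O : (Z -> Prop) -> Prop) (m : Z -> Z') :
  is_topology O -> is_topology (fun V : Z' -> Prop => O (fun z => V (m z))).
Proof.
  intros [HT [HF [HI HU]]]. split; [exact HT|split; [exact HF|split]].
  - intros U V HUo HVo. apply (HI _ _ HUo HVo).
  - intros F HFo.
    replace (fun z => exists V, F V /\ V (m z))
      with (fun z => exists W, (exists V, F V /\ W = fun z => V (m z)) /\ W z).
    + apply HU. intros W [V [FV ->]]. auto.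
    + apply pred_ext; intros z; split.
      * intros [W [[V [FV ->]] Wz]]. eauto.
      * intros [V [FV Vz]]. exists (fun z => V (m z)). eauto.
Qed.

Lemma continuous_const {Z X : Type} (OZ : (Z -> Prop) -> Prop) (OX : (X -> Prop) -> Prop)
  (x : X) : is_topology OZ -> continuous OZ OX (fun _ => x).
Proof.
  intros [HT [HF _]] V _. destruct (classic (V x)) as [Vx|nVx].
  - replace (fun _ : Z => V x) with (fun _ : Z => True); auto. apply pred_ext; tauto.
  - replace (fun _ : Z => V x) with (fun _ : Z => False); auto. apply pred_ext; tauto.
Qed.

Lemma continuous_pair {Z X Y : Type} (OZ : (Z -> Prop) -> Prop) (OX : (X -> Prop) -> Prop)
  (OY : (Y -> Prop) -> Prop) (f : Z -> X) (g : Z -> Y) :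
  is_topology OZ -> continuous OZ OX f -> continuous OZ OY g ->
  continuous OZ (prod_open OX OY) (fun z => (f z, g z)).
Proof.
  intros TZ Hf Hg W HW. apply open_local; auto. intros z Wz.
  destruct (HW _ Wz) as [A [B [HA [HB [Az [Bz H]]]]]].
  exists (fun y => A (f y) /\ B (g y)). split; [apply TZ; auto|split; auto].
  intros y [Ay By]. apply (H (f y, g y)); auto.
Qed.

Lemma continuous_fst {X Y : Type} (OX : (X -> Prop) -> Prop) (OY : (Y -> Prop) -> Prop) :
  is_topology OY -> continuous (prod_open OX OY) OX (@fst X Y).
Proof. intros [HT _] A HA p Ap. exists A, (fun _ => True). repeat split; auto. Qed.

Lemma continuous_snd {X Y : Type} (OX : (X -> Prop) -> Prop) (OY : (Y -> Prop) -> Prop) :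
  is_topology OX -> continuous (prod_open OX OY) OY (@snd X Y).
Proof. intros [HT _] B HB p Bp. exists (fun _ => True), B. repeat split; auto. Qed.

Lemma continuous_prod_map {A A' B B' : Type} (OA : (A -> Prop) -> Prop)
  (OA' : (A' -> Prop) -> Prop) (OB : (B -> Prop) -> Prop) (OB' : (B' -> Prop) -> Prop)
  (f : A -> A') (g : B -> B') :
  continuous OA OA' f -> continuous OB OB' g ->
  continuous (prod_open OA OB) (prod_open OA' OB') (fun p => (f (fst p), g (snd p))).
Proof.
  intros Hf Hg W HW p Hp. destruct (HW _ Hp) as [U [V [HU [HV [Up [Vp H]]]]]].
  exists (fun a => U (f a)), (fun b => V (g b)).
  split; [apply Hf; auto|split; [apply Hg; auto|split; [auto|split; [auto|]]]].
  intros q Hq1 Hq2; apply (H (f (fst q), g (snd q))); auto.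
Qed.

Lemma open_map_of_continuous_inverse {A B : Type} (OA : (A -> Prop) -> Prop)
  (OB : (B -> Prop) -> Prop) (f : A -> B) (g : B -> A) :
  continuous OB OA g -> (forall a, g (f a) = a) -> (forall b, f (g b) = b) ->
  forall U, OA U -> OB (fun b => exists a, U a /\ f a = b).
Proof.
  intros Hg gf fg U HU.
  replace (fun b => exists a, U a /\ f a = b) with (fun b => U (g b)); [apply Hg; auto|].
  apply pred_ext; intros b; split.
  - intros Ub. exists (g b); auto.
  - intros [a [Ua <-]]. rewrite gf; auto.
Qed.

Section Generated.
Context {Z : Type} (B : (Z -> Prop) -> Prop).

Lemma generated_sub (V : Z -> Prop) : B V -> generated B V.
Proof.
  intros HV x Vx. exists (V :: nil). repeat split.
  - intros W [<-|[]]; auto.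
  - intros W [<-|[]]; auto.
  - intros y Hy. apply Hy. left; auto.
Qed.

Lemma generated_full : generated B (fun _ => True).
Proof. intros x _. exists nil. repeat split; intros; simpl in *; tauto. Qed.

Lemma generated_inter (U V : Z -> Prop) :
  generated B U -> generated B V -> generated B (fun x => U x /\ V x).
Proof.
  intros HU HV x [Ux Vx]. destruct (HU x Ux) as [l [l1 [l2 l3]]].
  destruct (HV x Vx) as [m [m1 [m2 m3]]]. exists (l ++ m). split; [|split].
  - intros W HW. apply in_app_or in HW. destruct HW; [apply l1|apply m1]; auto.
  - intros W HW. apply in_app_or in HW. destruct HW; [apply l2|apply m2]; auto.
  - intros y H; split.
    + apply l3. intros W HW. apply H. apply in_or_app; auto.
    + apply m3. intros W HW. apply H. apply in_or_app; auto.
Qed.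

Lemma generated_local (U : Z -> Prop) :
  (forall x, U x -> exists N, generated B N /\ N x /\ forall y, N y -> U y) -> generated B U.
Proof.
  intros H x Hx. destruct (H x Hx) as [N [HN [Nx NU]]].
  destruct (HN x Nx) as [l [l1 [l2 l3]]]. exists l; repeat split; auto.
Qed.

Lemma generated_is_topology : is_topology (generated B).
Proof.
  split; [apply generated_full|split; [intros x []|split; [apply generated_inter|]]].
  intros F HF. apply generated_local. intros x [U [FU Ux]].
  exists U. split; [apply HF; auto|split; auto]. intros y Uy. exists U; auto.
Qed.

End Generated.

Lemma generated_preimage {Z Z' : Type} (B : (Z -> Prop) -> Prop) (B' : (Z' -> Prop) -> Prop)
  (m : Z -> Z') (V : Z' -> Prop) :
  (forall W, B' W -> B (fun a => W (m a))) -> generated B' V -> generated B (fun a => V (m a)).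
Proof.
  intros HB HV a Ha. destruct (HV (m a) Ha) as [l [l1 [l2 l3]]].
  exists (map (fun W => fun a => W (m a)) l). repeat split.
  - intros W HW. apply in_map_iff in HW. destruct HW as [W' [<- HW']]. apply HB; auto.
  - intros W HW. apply in_map_iff in HW. destruct HW as [W' [<- HW']]. apply l2; auto.
  - intros y Hy. apply l3. intros W HW. apply (Hy (fun a => W (m a))).
    apply (in_map (fun (W0 : Z' -> Prop) (a0 : Z) => W0 (m a0))); auto.
Qed.

(** * The unit interval *)

Lemma I_eq (s t : I) : proj1_sig s = proj1_sig t -> s = t.
Proof.
  destruct s as [s Hs], t as [t Ht]; simpl; intros ->.
  f_equal; apply proof_irrelevance.
Qed.

Lemma clamp_val (r : R) : 0 <= r <= 1 -> proj1_sig (clampI r) = r.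
Proof.
  intros H; simpl. unfold Rmin, Rmax.
  destruct (Rle_dec 1 r); destruct (Rle_dec 0 _); lra.
Qed.

Lemma clamp_cases (r : R) : let v := proj1_sig (clampI r) in
  (r <= 0 /\ v = 0) \/ (0 <= r <= 1 /\ v = r) \/ (1 <= r /\ v = 1).
Proof.
  simpl. unfold Rmin, Rmax.
  destruct (Rle_dec 1 r); destruct (Rle_dec 0 _); lra.
Qed.

Lemma clamp_lip (r q : R) :
  Rabs (proj1_sig (clampI r) - proj1_sig (clampI q)) <= Rabs (r - q).
Proof.
  destruct (clamp_cases r) as [[A B]|[[A B]|[A B]]]; rewrite B;
  destruct (clamp_cases q) as [[C D]|[[C D]|[C D]]]; rewrite D;
  unfold Rabs; repeat (match goal with |- context [Rcase_abs ?a] => destruct (Rcase_abs a) end);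
  lra.
Qed.

Lemma clampI_eq (r q : R) : r = q -> clampI r = clampI q.
Proof. intros ->; reflexivity. Qed.

Lemma clamp_I (t : I) : clampI (proj1_sig t) = t.
Proof. apply I_eq, clamp_val, (proj2_sig t). Qed.

Lemma clamp0 : clampI 0 = I0.
Proof. apply I_eq. rewrite clamp_val; simpl; lra. Qed.

Lemma clamp1 : clampI 1 = I1.
Proof. apply I_eq. rewrite clamp_val; simpl; lra. Qed.

Lemma revI0 : revI I0 = I1.
Proof. apply I_eq; simpl; ring. Qed.

Lemma revI1 : revI I1 = I0.
Proof. apply I_eq; simpl; ring. Qed.

(** * Metric continuity on the interval and the square *)

Definition metric_open {Z : Type} (d : Z -> Z -> R) (W : Z -> Prop) : Prop :=
  forall p, W p -> exists e, 0 < e /\ forall q, d p q < e -> W q.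

Definition metric_cont {Z1 Z2 : Type} (d1 : Z1 -> Z1 -> R) (d2 : Z2 -> Z2 -> R)
  (m : Z1 -> Z2) : Prop :=
  forall p e, 0 < e -> exists del, 0 < del /\ forall q, d1 p q < del -> d2 (m p) (m q) < e.

Definition dR (x y : R) : R := Rabs (x - y).
Definition dI (s t : I) : R := Rabs (proj1_sig s - proj1_sig t).
Definition dII (p q : I * I) : R := Rmax (dI (fst p) (fst q)) (dI (snd p) (snd q)).

Definition real_cont {Z : Type} (d : Z -> Z -> R) (f : Z -> R) : Prop := metric_cont d dR f.

Lemma Rmax_lt_iff a b c : Rmax a b < c <-> a < c /\ b < c.
Proof. unfold Rmax; destruct (Rle_dec a b); split; intros; lra. Qed.

Lemma dI_refl (t : I) : dI t t = 0.
Proof. unfold dI. replace (_ - _) with 0 by ring. apply Rabs_R0. Qed.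

Lemma dI_ball_open (t : I) (e : R) : metric_open dI (fun s => dI t s < e).
Proof.
  intros p Hp. exists (e - dI t p). split; [lra|]. intros q Hq.
  unfold dI in *.
  pose proof (Rabs_triang (proj1_sig t - proj1_sig p) (proj1_sig p - proj1_sig q)).
  replace (proj1_sig t - proj1_sig p + (proj1_sig p - proj1_sig q)) with
    (proj1_sig t - proj1_sig q) in H by ring. lra.
Qed.

Lemma I_open_iff (W : I -> Prop) : I_open W <-> metric_open dI W.
Proof.
  split.
  - intros [V [HV HW]] p Hp. apply HW in Hp. destruct (HV _ Hp) as [e [He He']].
    exists e; split; auto. intros q Hq. apply HW, He'. unfold dI in Hq.
    rewrite Rabs_minus_sym; auto.
  - intros HW.
    exists (fun r => exists t e, W t /\ 0 < e /\ (forall q, dI t q < e -> W q) /\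
                     Rabs (r - proj1_sig t) < e).
    split.
    + intros r [t [e [Wt [He [Hq Hr]]]]].
      exists (e - Rabs (r - proj1_sig t)); split; [lra|].
      intros y Hy. exists t, e. repeat split; auto.
      pose proof (Rabs_triang (y - r) (r - proj1_sig t)).
      replace (y - r + (r - proj1_sig t)) with (y - proj1_sig t) in H by ring. lra.
    + intros t; split.
      * intros Wt. destruct (HW t Wt) as [e [He Hq]]. exists t, e. repeat split; auto.
        replace (proj1_sig t - proj1_sig t) with 0 by ring. rewrite Rabs_R0; lra.
      * intros [t' [e [Wt [He [Hq Hr]]]]]. apply Hq. unfold dI.
        rewrite Rabs_minus_sym; auto.
Qed.

Lemma II_open_iff (W : I * I -> Prop) : prod_open I_open I_open W <-> metric_open dII W.
Proof.
  split.
  - intros HW p Hp. destruct (HW p Hp) as [A [B [HA [HB [Ap [Bp Hq]]]]]].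
    apply I_open_iff in HA. apply I_open_iff in HB.
    destruct (HA _ Ap) as [e1 [He1 H1]]. destruct (HB _ Bp) as [e2 [He2 H2]].
    exists (Rmin e1 e2). split; [apply Rmin_glb_lt; auto|].
    intros q Hqq. unfold dII in Hqq. apply Rmax_lt_iff in Hqq. destruct Hqq as [Hq1 Hq2].
    apply Hq; [apply H1 | apply H2]; eapply Rlt_le_trans; eauto; [apply Rmin_l|apply Rmin_r].
  - intros HW p Hp. destruct (HW p Hp) as [e [He Hq0]].
    exists (fun s => dI (fst p) s < e), (fun s => dI (snd p) s < e).
    split; [apply I_open_iff, dI_ball_open|].
    split; [apply I_open_iff, dI_ball_open|].
    rewrite !dI_refl. split; [lra|]. split; [lra|].
    intros q H1 H2. apply Hq0. unfold dII. apply Rmax_lt_iff; auto.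
Qed.

Lemma continuous_I_iff {X : Type} (OX : (X -> Prop) -> Prop) (f : I -> X) :
  continuous I_open OX f <-> continuous (metric_open dI) OX f.
Proof. unfold continuous; split; intros H V HV; apply I_open_iff; auto; apply H; auto. Qed.

Lemma continuous_II_iff {X : Type} (OX : (X -> Prop) -> Prop) (f : I * I -> X) :
  continuous (prod_open I_open I_open) OX f <-> continuous (metric_open dII) OX f.
Proof. unfold continuous; split; intros H V HV; apply II_open_iff; auto; apply H; auto. Qed.

Lemma continuous_comp_metric {Z1 Z2 X : Type} (d1 : Z1 -> Z1 -> R) (d2 : Z2 -> Z2 -> R)
  (OX : (X -> Prop) -> Prop) (f : Z2 -> X) (m : Z1 -> Z2) :
  continuous (metric_open d2) OX f -> metric_cont d1 d2 m ->
  continuous (metric_open d1) OX (fun z => f (m z)).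
Proof.
  intros Hf Hm V HV p Hp. destruct (Hf V HV (m p) Hp) as [e [He He']].
  destruct (Hm p e He) as [del [Hd Hd']]. exists del; split; auto.
Qed.

Lemma metric_cont_comp {Z1 Z2 Z3 : Type} (d1 : Z1 -> Z1 -> R) (d2 : Z2 -> Z2 -> R)
  (d3 : Z3 -> Z3 -> R) (f : Z1 -> Z2) (g : Z2 -> Z3) :
  metric_cont d1 d2 f -> metric_cont d2 d3 g -> metric_cont d1 d3 (fun z => g (f z)).
Proof.
  intros Hf Hg p e He. destruct (Hg (f p) e He) as [d' [Hd' H']].
  destruct (Hf p d' Hd') as [d'' [Hd'' H'']]. exists d''; split; auto.
Qed.

Lemma metric_cont_clamp {Z : Type} (d : Z -> Z -> R) (f : Z -> R) :
  real_cont d f -> metric_cont d dI (fun z => clampI (f z)).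
Proof.
  intros H p e He. destruct (H p e He) as [del [Hd Hd']]. exists del; split; auto.
  intros q Hq. unfold dI. eapply Rle_lt_trans; [apply clamp_lip|]. apply Hd'; auto.
Qed.

Lemma metric_cont_pair {Z : Type} (d : Z -> Z -> R) (f g : Z -> I) :
  metric_cont d dI f -> metric_cont d dI g -> metric_cont d dII (fun z => (f z, g z)).
Proof.
  intros Hf Hg p e He. destruct (Hf p e He) as [d1 [Hd1 H1]].
  destruct (Hg p e He) as [d2 [Hd2 H2]].
  exists (Rmin d1 d2); split; [apply Rmin_glb_lt; auto|]. intros q Hq.
  unfold dII; simpl. apply Rmax_lt_iff; split; [apply H1|apply H2];
  eapply Rlt_le_trans; eauto; [apply Rmin_l|apply Rmin_r].
Qed.

Lemma metric_cont_fst : metric_cont dII dI (@fst I I).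
Proof.
  intros p e He. exists e; split; auto. intros q Hq.
  unfold dII in Hq. apply Rmax_lt_iff in Hq. apply Hq.
Qed.

Lemma metric_cont_snd : metric_cont dII dI (@snd I I).
Proof.
  intros p e He. exists e; split; auto. intros q Hq.
  unfold dII in Hq. apply Rmax_lt_iff in Hq. apply Hq.
Qed.

Lemma metric_cont_revI : metric_cont dI dI revI.
Proof.
  intros p e He. exists e; split; auto. intros q Hq. unfold dI in *; simpl.
  replace (1 - proj1_sig p - (1 - proj1_sig q)) with (- (proj1_sig p - proj1_sig q)) by ring.
  rewrite Rabs_Ropp; auto.
Qed.

Lemma continuous_pair_metric {Z X Y : Type} (d : Z -> Z -> R) (OX : (X -> Prop) -> Prop)
  (OY : (Y -> Prop) -> Prop) (f : Z -> X) (g : Z -> Y) :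
  continuous (metric_open d) OX f -> continuous (metric_open d) OY g ->
  continuous (metric_open d) (prod_open OX OY) (fun z => (f z, g z)).
Proof.
  intros Hf Hg W HW p Hp.
  destruct (HW _ Hp) as [A [B [HA [HB [HAz [HBz Hq]]]]]].
  destruct (Hf A HA p HAz) as [e1 [He1 H1]]. destruct (Hg B HB p HBz) as [e2 [He2 H2]].
  exists (Rmin e1 e2); split; [apply Rmin_glb_lt; auto|]. intros q Hqq.
  apply (Hq (f q, g q)); [apply H1|apply H2]; eapply Rlt_le_trans; eauto;
  [apply Rmin_l|apply Rmin_r].
Qed.

Section RealContinuity.
Context {Z : Type} (d : Z -> Z -> R).

Lemma real_cont_const c : real_cont d (fun _ => c).
Proof.
  intros p e He. exists 1; split; [lra|]. intros q _. unfold dR.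
  replace (c - c) with 0 by ring. rewrite Rabs_R0; lra.
Qed.

Lemma real_cont_plus f g :
  real_cont d f -> real_cont d g -> real_cont d (fun z => f z + g z).
Proof.
  intros Hf Hg p e He. destruct (Hf p (e/2)) as [d1 [Hd1 H1]]; [lra|].
  destruct (Hg p (e/2)) as [d2 [Hd2 H2]]; [lra|].
  exists (Rmin d1 d2); split; [apply Rmin_glb_lt; auto|]. intros q Hq.
  assert (A1 := H1 q (Rlt_le_trans _ _ _ Hq (Rmin_l _ _))).
  assert (A2 := H2 q (Rlt_le_trans _ _ _ Hq (Rmin_r _ _))).
  unfold dR in *. pose proof (Rabs_triang (f p - f q) (g p - g q)).
  replace (f p + g p - (f q + g q)) with (f p - f q + (g p - g q)) by ring. lra.
Qed.

Lemma real_cont_opp f : real_cont d f -> real_cont d (fun z => - f z).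
Proof.
  intros H p e He. destruct (H p e He) as [del [Hd H']]. exists del; split; auto.
  intros q Hq. unfold dR in *. replace (- f p - - f q) with (- (f p - f q)) by ring.
  rewrite Rabs_Ropp; auto.
Qed.

Lemma real_cont_minus f g :
  real_cont d f -> real_cont d g -> real_cont d (fun z => f z - g z).
Proof. intros Hf Hg. apply (real_cont_plus f (fun z => - g z)); auto. apply real_cont_opp; auto. Qed.

Lemma real_cont_mul f g :
  real_cont d f -> real_cont d g -> real_cont d (fun z => f z * g z).
Proof.
  intros Hf Hg p e He.
  set (M := Rabs (f p) + Rabs (g p) + 1).
  assert (HM : 0 < M) by (unfold M; pose proof (Rabs_pos (f p)); pose proof (Rabs_pos (g p)); lra).
  set (e' := Rmin 1 (e / (2 * M))).
  assert (He' : 0 < e') by (apply Rmin_glb_lt; [lra|apply Rdiv_lt_0_compat; lra]).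
  destruct (Hf p e' He') as [d1 [Hd1 H1]]. destruct (Hg p e' He') as [d2 [Hd2 H2]].
  exists (Rmin d1 d2); split; [apply Rmin_glb_lt; auto|]. intros q Hq.
  assert (A1 := H1 q (Rlt_le_trans _ _ _ Hq (Rmin_l _ _))).
  assert (A2 := H2 q (Rlt_le_trans _ _ _ Hq (Rmin_r _ _))).
  unfold dR in *.
  replace (f p * g p - f q * g q) with (f p * (g p - g q) + g q * (f p - f q)) by ring.
  eapply Rle_lt_trans; [apply Rabs_triang|]. rewrite !Rabs_mult.
  assert (Hgq : Rabs (g q) <= Rabs (g p) + 1).
  { pose proof (Rabs_triang (g q - g p) (g p)). replace (g q - g p + g p) with (g q) in H by ring.
    rewrite Rabs_minus_sym in A2. assert (e' <= 1) by apply Rmin_l. lra. }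
  assert (He2 : e' * (2 * M) <= e).
  { assert (e' <= e / (2 * M)) by apply Rmin_r.
    apply (Rmult_le_compat_r (2 * M)) in H; [|lra]. unfold Rdiv in H.
    rewrite Rmult_assoc, Rinv_l in H; lra. }
  pose proof (Rabs_pos (f p)). pose proof (Rabs_pos (g q)).
  pose proof (Rabs_pos (g p - g q)). pose proof (Rabs_pos (f p - f q)).
  assert (Rabs (f p) * Rabs (g p - g q) <= Rabs (f p) * e') by (apply Rmult_le_compat_l; lra).
  assert (Rabs (g q) * Rabs (f p - f q) <= (Rabs (g p) + 1) * e').
  { apply Rmult_le_compat; lra. }
  unfold M in *. nra.
Qed.

Lemma Rmin_lip a b c d0 : Rabs (Rmin a b - Rmin c d0) <= Rmax (Rabs (a - c)) (Rabs (b - d0)).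
Proof.
  unfold Rmin, Rmax.
  repeat (match goal with |- context [Rle_dec ?a ?b] => destruct (Rle_dec a b) end);
  unfold Rabs in *; repeat (match goal with |- context [Rcase_abs ?a] => destruct (Rcase_abs a)
   | H : context [Rcase_abs ?a] |- _ => destruct (Rcase_abs a) end); lra.
Qed.

Lemma Rmax_lip a b c d0 : Rabs (Rmax a b - Rmax c d0) <= Rmax (Rabs (a - c)) (Rabs (b - d0)).
Proof.
  unfold Rmax.
  repeat (match goal with |- context [Rle_dec ?a ?b] => destruct (Rle_dec a b) end);
  unfold Rabs in *; repeat (match goal with |- context [Rcase_abs ?a] => destruct (Rcase_abs a)
   | H : context [Rcase_abs ?a] |- _ => destruct (Rcase_abs a) end); lra.
Qed.

Lemma real_cont_min f g :
  real_cont d f -> real_cont d g -> real_cont d (fun z => Rmin (f z) (g z)).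
Proof.
  intros Hf Hg p e He. destruct (Hf p e He) as [d1 [Hd1 H1]].
  destruct (Hg p e He) as [d2 [Hd2 H2]].
  exists (Rmin d1 d2); split; [apply Rmin_glb_lt; auto|]. intros q Hq.
  assert (A1 := H1 q (Rlt_le_trans _ _ _ Hq (Rmin_l _ _))).
  assert (A2 := H2 q (Rlt_le_trans _ _ _ Hq (Rmin_r _ _))).
  unfold dR in *. eapply Rle_lt_trans; [apply Rmin_lip|]. apply Rmax_lt_iff; auto.
Qed.

Lemma real_cont_max f g :
  real_cont d f -> real_cont d g -> real_cont d (fun z => Rmax (f z) (g z)).
Proof.
  intros Hf Hg p e He. destruct (Hf p e He) as [d1 [Hd1 H1]].
  destruct (Hg p e He) as [d2 [Hd2 H2]].
  exists (Rmin d1 d2); split; [apply Rmin_glb_lt; auto|]. intros q Hq.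
  assert (A1 := H1 q (Rlt_le_trans _ _ _ Hq (Rmin_l _ _))).
  assert (A2 := H2 q (Rlt_le_trans _ _ _ Hq (Rmin_r _ _))).
  unfold dR in *. eapply Rle_lt_trans; [apply Rmax_lip|]. apply Rmax_lt_iff; auto.
Qed.

Lemma continuous_paste {X : Type} (OX : (X -> Prop) -> Prop) (c : Z -> R) (f g h : Z -> X) :
  real_cont d c -> continuous (metric_open d) OX g -> continuous (metric_open d) OX h ->
  (forall q, c q <= 0 -> f q = g q) -> (forall q, 0 <= c q -> f q = h q) ->
  continuous (metric_open d) OX f.
Proof.
  intros Hc Hg Hh Efg Efh V HV p Hp.
  destruct (Rlt_le_dec (c p) 0) as [Hlt|Hge].
  - rewrite Efg in Hp by lra. destruct (Hg V HV p Hp) as [e [He H1]].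
    destruct (Hc p (- c p)) as [del [Hd H2]]; [lra|].
    exists (Rmin e del); split; [apply Rmin_glb_lt; auto|]. intros q Hq.
    assert (A1 := H1 q (Rlt_le_trans _ _ _ Hq (Rmin_l _ _))).
    assert (A2 := H2 q (Rlt_le_trans _ _ _ Hq (Rmin_r _ _))).
    unfold dR in A2. rewrite Efg; auto.
    unfold Rabs in A2; destruct (Rcase_abs _) in A2; lra.
  - destruct (Rle_lt_dec (c p) 0) as [Hle|Hgt].
    + assert (Hp' : V (h p)) by (rewrite <- Efh; auto; lra).
      rewrite Efg in Hp by lra.
      destruct (Hg V HV p Hp) as [e [He H1]]. destruct (Hh V HV p Hp') as [e2 [He2 H2]].
      exists (Rmin e e2); split; [apply Rmin_glb_lt; auto|]. intros q Hq.
      assert (A1 := H1 q (Rlt_le_trans _ _ _ Hq (Rmin_l _ _))).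
      assert (A2 := H2 q (Rlt_le_trans _ _ _ Hq (Rmin_r _ _))).
      destruct (Rle_dec (c q) 0); [rewrite Efg|rewrite Efh]; auto; lra.
    + rewrite Efh in Hp by lra. destruct (Hh V HV p Hp) as [e [He H1]].
      destruct (Hc p (c p)) as [del [Hd H2]]; [lra|].
      exists (Rmin e del); split; [apply Rmin_glb_lt; auto|]. intros q Hq.
      assert (A1 := H1 q (Rlt_le_trans _ _ _ Hq (Rmin_l _ _))).
      assert (A2 := H2 q (Rlt_le_trans _ _ _ Hq (Rmin_r _ _))).
      unfold dR in A2. rewrite Efh; auto.
      unfold Rabs in A2; destruct (Rcase_abs _) in A2; lra.
Qed.

Lemma continuous_clamp_comp {X : Type} (OX : (X -> Prop) -> Prop) (a : I -> X) (psi : Z -> R) :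
  continuous I_open OX a -> real_cont d psi ->
  continuous (metric_open d) OX (fun z => a (clampI (psi z))).
Proof.
  intros Ha Hp. apply continuous_I_iff in Ha.
  apply (continuous_comp_metric d dI OX a (fun z => clampI (psi z))); auto.
  apply metric_cont_clamp; auto.
Qed.

End RealContinuity.

Lemma real_cont_id : real_cont dR (fun x => x).
Proof. intros p e He. exists e; split; auto. Qed.

Lemma real_cont_I : real_cont dI (fun s => proj1_sig s).
Proof. intros p e He. exists e; split; auto. Qed.

Lemma real_cont_fst : real_cont dII (fun p => proj1_sig (fst p)).
Proof. apply (metric_cont_comp dII dI dR _ _ metric_cont_fst real_cont_I). Qed.

Lemma real_cont_snd : real_cont dII (fun p => proj1_sig (snd p)).
Proof. apply (metric_cont_comp dII dI dR _ _ metric_cont_snd real_cont_I). Qed.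

Ltac real_cont_tac := repeat (first [apply real_cont_const | apply real_cont_fst
  | apply real_cont_snd | apply real_cont_I | apply real_cont_id | apply real_cont_minus
  | apply real_cont_plus | apply real_cont_mul | apply real_cont_opp | apply real_cont_min
  | apply real_cont_max]).

Lemma continuous_II_clamp {X : Type} (OX : (X -> Prop) -> Prop) (H : I * I -> X)
  (f g : I * I -> R) :
  continuous (prod_open I_open I_open) OX H -> real_cont dII f -> real_cont dII g ->
  continuous (metric_open dII) OX (fun p : I * I => H (clampI (f p), clampI (g p))).
Proof.
  intros HH Hf Hg. apply continuous_II_iff in HH.
  apply (continuous_comp_metric dII dII OX H (fun p : I * I => (clampI (f p), clampI (g p))));
    auto.
  apply metric_cont_pair; apply metric_cont_clamp; auto.
Qed.

(** * Paths and loops *)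

(* [chain2 a b] runs [a] over [0,1] and then [b] over [1,2] (and [chain3] three
   paths over [0,3]); every reparametrized concatenation factors through them. *)
Definition chain2 {X : Type} (a b : I -> X) (r : R) : X :=
  if Rle_dec r 1 then a (clampI r) else b (clampI (r - 1)).

Definition chain3 {X : Type} (a b c : I -> X) (r : R) : X :=
  if Rle_dec r 1 then a (clampI r) else chain2 b c (r - 1).

Lemma real_cont_pred : real_cont dR (fun r => r - 1).
Proof. real_cont_tac. Qed.

Lemma chain2_continuous {X : Type} (OX : (X -> Prop) -> Prop) (a b : I -> X) :
  continuous I_open OX a -> continuous I_open OX b -> a I1 = b I0 ->
  continuous (metric_open dR) OX (chain2 a b).
Proof.
  intros Ha Hb E.
  apply (continuous_paste dR OX (fun r => r - 1) (chain2 a b) (fun r => a (clampI r))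
           (fun r => b (clampI (r - 1)))).
  - apply real_cont_pred.
  - apply (continuous_clamp_comp dR OX a (fun r => r)); auto. apply real_cont_id.
  - apply (continuous_clamp_comp dR OX b (fun r => r - 1)); auto. apply real_cont_pred.
  - intros q Hq. unfold chain2. destruct (Rle_dec q 1); [reflexivity|lra].
  - intros q Hq. unfold chain2. destruct (Rle_dec q 1); [|reflexivity].
    assert (q = 1) by lra. subst. rewrite clamp1, E.
    replace (1 - 1) with 0 by ring. rewrite clamp0; auto.
Qed.

Lemma chain3_continuous {X : Type} (OX : (X -> Prop) -> Prop) (a b c : I -> X) :
  continuous I_open OX a -> continuous I_open OX b -> continuous I_open OX c ->
  a I1 = b I0 -> b I1 = c I0 ->
  continuous (metric_open dR) OX (chain3 a b c).
Proof.
  intros Ha Hb Hc E1 E2.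
  apply (continuous_paste dR OX (fun r => r - 1) (chain3 a b c) (fun r => a (clampI r))
           (fun r => chain2 b c (r - 1))).
  - apply real_cont_pred.
  - apply (continuous_clamp_comp dR OX a (fun r => r)); auto. apply real_cont_id.
  - apply (continuous_comp_metric dR dR OX (chain2 b c) (fun r => r - 1)).
    + apply chain2_continuous; auto.
    + apply real_cont_pred.
  - intros q Hq. unfold chain3. destruct (Rle_dec q 1); [reflexivity|lra].
  - intros q Hq. unfold chain3. destruct (Rle_dec q 1); [|reflexivity].
    assert (q = 1) by lra. subst. rewrite clamp1, E1.
    replace (1 - 1) with 0 by ring. unfold chain2. destruct (Rle_dec 0 1); [|lra].
    rewrite clamp0; auto.
Qed.

Lemma concat_fun_chain2 {X : Type} (a b : I -> X) (t : I) :
  concat_fun a b t = chain2 a b (2 * proj1_sig t).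
Proof.
  unfold concat_fun, chain2.
  destruct (Rle_dec (proj1_sig t) (1/2)); destruct (Rle_dec (2 * proj1_sig t) 1); try lra;
  reflexivity.
Qed.

Lemma continuous_chain_comp {X : Type} (OX : (X -> Prop) -> Prop) (P : R -> X)
  (g : I * I -> R) :
  continuous (metric_open dR) OX P -> real_cont dII g ->
  continuous (prod_open I_open I_open) OX (fun p => P (g p)).
Proof. intros HP Hg. apply continuous_II_iff. apply (continuous_comp_metric dII dR OX P g); auto. Qed.

Section Loops.
Context {X : Type} (OX : (X -> Prop) -> Prop) (x0 : X).

Lemma is_loop_concat (a b : I -> X) :
  is_loop OX x0 a -> is_loop OX x0 b -> is_loop OX x0 (concat_fun a b).
Proof.
  intros [Ha [Ha0 Ha1]] [Hb [Hb0 Hb1]]. split; [|split].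
  - apply continuous_I_iff.
    assert (E : concat_fun a b = fun t => chain2 a b (2 * proj1_sig t)).
    { apply functional_extensionality; intros t. apply concat_fun_chain2. }
    rewrite E. apply (continuous_comp_metric dI dR OX (chain2 a b)).
    + apply chain2_continuous; [apply Ha|apply Hb|congruence].
    + real_cont_tac.
  - unfold concat_fun; simpl. destruct (Rle_dec 0 (1/2)); [|lra].
    replace (2 * 0) with 0 by ring. rewrite clamp0; auto.
  - unfold concat_fun; simpl. destruct (Rle_dec 1 (1/2)); [lra|].
    replace (2 * 1 - 1) with 1 by ring. rewrite clamp1; auto.
Qed.

Lemma is_loop_rev (a : I -> X) : is_loop OX x0 a -> is_loop OX x0 (fun t => a (revI t)).
Proof.
  intros [Ha [Ha0 Ha1]]. split; [|split].
  - apply continuous_I_iff.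
    apply (continuous_comp_metric dI dI OX a revI);
      [apply continuous_I_iff; auto|apply metric_cont_revI].
  - rewrite revI0; auto.
  - rewrite revI1; auto.
Qed.

Lemma homotopic_refl (a : I -> X) : is_loop OX x0 a -> homotopic OX x0 a a.
Proof.
  intros [Ha [Ha0 Ha1]]. exists (fun p : I * I => a (fst p)). split; [|split; [|split]]; auto.
  apply continuous_II_iff.
  apply (continuous_comp_metric dII dI OX a (@fst I I));
    [apply continuous_I_iff; auto|apply metric_cont_fst].
Qed.

Lemma homotopic_sym (a b : I -> X) : homotopic OX x0 a b -> homotopic OX x0 b a.
Proof.
  intros [H [HH [H0 [H1 He]]]]. exists (fun p : I * I => H (fst p, revI (snd p))).
  split; [|split; [|split]].
  - apply continuous_II_iff. apply continuous_II_iff in HH.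
    apply (continuous_comp_metric dII dII OX H (fun p : I * I => (fst p, revI (snd p)))); auto.
    apply metric_cont_pair; [apply metric_cont_fst|].
    apply (metric_cont_comp dII dI dI); [apply metric_cont_snd|apply metric_cont_revI].
  - intros s; simpl. rewrite revI0; auto.
  - intros s; simpl. rewrite revI1; auto.
  - intros t; simpl; apply He.
Qed.

Lemma homotopic_trans (a b c : I -> X) :
  homotopic OX x0 a b -> homotopic OX x0 b c -> homotopic OX x0 a c.
Proof.
  intros [H [HH [H0 [H1 He]]]] [K [HK [K0 [K1 Ke]]]].
  exists (fun p : I * I => if Rle_dec (proj1_sig (snd p)) (1/2)
                   then H (fst p, clampI (2 * proj1_sig (snd p)))
                   else K (fst p, clampI (2 * proj1_sig (snd p) - 1))).
  split; [|split; [|split]].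
  - apply continuous_II_iff.
    apply (continuous_paste dII OX (fun p : I * I => proj1_sig (snd p) - 1/2) _
      (fun p : I * I => H (clampI (proj1_sig (fst p)), clampI (2 * proj1_sig (snd p))))
      (fun p : I * I => K (clampI (proj1_sig (fst p)), clampI (2 * proj1_sig (snd p) - 1)))).
    + real_cont_tac.
    + apply continuous_II_clamp; auto; real_cont_tac.
    + apply continuous_II_clamp; auto; real_cont_tac.
    + intros q Hq. cbv beta. rewrite clamp_I. destruct (Rle_dec _ _); [reflexivity|lra].
    + intros q Hq. cbv beta. rewrite clamp_I. destruct (Rle_dec _ _); [|reflexivity].
      assert (E : proj1_sig (snd q) = 1/2) by lra. rewrite E.
      replace (2 * (1/2) - 1) with 0 by field. replace (2 * (1/2)) with 1 by field.
      rewrite clamp1, clamp0, H1, K0. reflexivity.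
  - intros s; simpl. destruct (Rle_dec 0 (1/2)); [|lra].
    replace (2 * 0) with 0 by ring. rewrite clamp0; auto.
  - intros s; simpl. destruct (Rle_dec 1 (1/2)); [lra|].
    replace (2 * 1 - 1) with 1 by ring. rewrite clamp1; auto.
  - intros t; simpl. destruct (Rle_dec _ _); [apply He|apply Ke].
Qed.

Lemma homotopic_concat (a a' b b' : I -> X) :
  homotopic OX x0 a a' -> homotopic OX x0 b b' ->
  homotopic OX x0 (concat_fun a b) (concat_fun a' b').
Proof.
  intros [H [HH [H0 [H1 He]]]] [K [HK [K0 [K1 Ke]]]].
  exists (fun p : I * I => if Rle_dec (proj1_sig (fst p)) (1/2)
                   then H (clampI (2 * proj1_sig (fst p)), snd p)
                   else K (clampI (2 * proj1_sig (fst p) - 1), snd p)).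
  split; [|split; [|split]].
  - apply continuous_II_iff.
    apply (continuous_paste dII OX (fun p : I * I => proj1_sig (fst p) - 1/2) _
      (fun p : I * I => H (clampI (2 * proj1_sig (fst p)), clampI (proj1_sig (snd p))))
      (fun p : I * I => K (clampI (2 * proj1_sig (fst p) - 1), clampI (proj1_sig (snd p))))).
    + real_cont_tac.
    + apply continuous_II_clamp; auto; real_cont_tac.
    + apply continuous_II_clamp; auto; real_cont_tac.
    + intros q Hq. cbv beta. rewrite clamp_I. destruct (Rle_dec _ _); [reflexivity|lra].
    + intros q Hq. cbv beta. rewrite clamp_I. destruct (Rle_dec _ _); [|reflexivity].
      assert (E : proj1_sig (fst q) = 1/2) by lra. rewrite E.
      replace (2 * (1/2) - 1) with 0 by field. replace (2 * (1/2)) with 1 by field.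
      rewrite clamp1, clamp0. destruct (He (snd q)) as [_ ->]. destruct (Ke (snd q)) as [-> _].
      reflexivity.
  - intros s; unfold concat_fun; simpl. destruct (Rle_dec _ _); auto.
  - intros s; unfold concat_fun; simpl. destruct (Rle_dec _ _); auto.
  - intros t; simpl. destruct (Rle_dec 0 (1/2)); [|lra]. destruct (Rle_dec 1 (1/2)); [lra|].
    replace (2 * 0) with 0 by ring. replace (2 * 1 - 1) with 1 by ring.
    rewrite clamp0, clamp1. split; [apply He|apply Ke].
Qed.

Lemma homotopic_rev (a b : I -> X) :
  homotopic OX x0 a b -> homotopic OX x0 (fun t => a (revI t)) (fun t => b (revI t)).
Proof.
  intros [H [HH [H0 [H1 He]]]]. exists (fun p : I * I => H (revI (fst p), snd p)).
  split; [|split; [|split]].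
  - apply continuous_II_iff. apply continuous_II_iff in HH.
    apply (continuous_comp_metric dII dII OX H (fun p : I * I => (revI (fst p), snd p))); auto.
    apply metric_cont_pair; [|apply metric_cont_snd].
    apply (metric_cont_comp dII dI dI); [apply metric_cont_fst|apply metric_cont_revI].
  - intros s; simpl; auto.
  - intros s; simpl; auto.
  - intros t; simpl. rewrite revI0, revI1. split; apply He.
Qed.

End Loops.

Lemma is_loop_comp {X X' : Type} (OX : (X -> Prop) -> Prop) (x0 : X)
  (OX' : (X' -> Prop) -> Prop) (x0' : X') (f : X -> X') (a : I -> X) :
  continuous OX OX' f -> f x0 = x0' ->
  is_loop OX x0 a -> is_loop OX' x0' (fun t => f (a t)).
Proof.
  intros Hf Hf0 [Ha [Ha0 Ha1]]. split; [|split].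
  - apply (continuous_comp _ OX); auto.
  - rewrite Ha0; auto.
  - rewrite Ha1; auto.
Qed.

Lemma homotopic_comp {X X' : Type} (OX : (X -> Prop) -> Prop) (x0 : X)
  (OX' : (X' -> Prop) -> Prop) (x0' : X') (f : X -> X') (a b : I -> X) :
  continuous OX OX' f -> f x0 = x0' ->
  homotopic OX x0 a b -> homotopic OX' x0' (fun t => f (a t)) (fun t => f (b t)).
Proof.
  intros Hf Hf0 [H [HH [H0 [H1 He]]]]. exists (fun p : I * I => f (H p)).
  split; [|split; [|split]].
  - apply (continuous_comp _ OX); auto.
  - intros s; rewrite H0; auto.
  - intros s; rewrite H1; auto.
  - intros t; destruct (He t) as [-> ->]; auto.
Qed.

Lemma is_loop_pair {X Y : Type} (OX : (X -> Prop) -> Prop) (x0 : X)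
  (OY : (Y -> Prop) -> Prop) (y0 : Y) (a : I -> X) (b : I -> Y) :
  is_loop OX x0 a -> is_loop OY y0 b ->
  is_loop (prod_open OX OY) (x0, y0) (fun t => (a t, b t)).
Proof.
  intros [Ha [Ha0 Ha1]] [Hb [Hb0 Hb1]]. split; [|split].
  - apply continuous_I_iff. apply continuous_pair_metric; apply continuous_I_iff; auto.
  - rewrite Ha0, Hb0; auto.
  - rewrite Ha1, Hb1; auto.
Qed.

Lemma homotopic_pair {X Y : Type} (OX : (X -> Prop) -> Prop) (x0 : X)
  (OY : (Y -> Prop) -> Prop) (y0 : Y) (a b : I -> X) (a' b' : I -> Y) :
  homotopic OX x0 a b -> homotopic OY y0 a' b' ->
  homotopic (prod_open OX OY) (x0, y0) (fun t => (a t, a' t)) (fun t => (b t, b' t)).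
Proof.
  intros [H [HH [H0 [H1 He]]]] [K [HK [K0 [K1 Ke]]]]. exists (fun p : I * I => (H p, K p)).
  split; [|split; [|split]].
  - apply continuous_II_iff. apply continuous_II_iff in HH. apply continuous_II_iff in HK.
    apply continuous_pair_metric; auto.
  - intros s; rewrite H0, K0; auto.
  - intros s; rewrite H1, K1; auto.
  - intros t; destruct (He t) as [-> ->]; destruct (Ke t) as [-> ->]; auto.
Qed.

(** * The fundamental group *)

Record group_laws {G : Type} (mul : G -> G -> G) (inv : G -> G) (one : G) : Prop := {
  g_assoc : forall x y z, mul (mul x y) z = mul x (mul y z);
  g_lid : forall x, mul one x = x;
  g_rid : forall x, mul x one = x;
  g_linv : forall x, mul (inv x) x = one;
  g_rinv : forall x, mul x (inv x) = one }.

Definition group_hom {G G' : Type} (mul : G -> G -> G) (mul' : G' -> G' -> G')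
  (h : G -> G') : Prop :=
  forall x y, h (mul x y) = mul' (h x) (h y).

Section GroupHom.
Context {G G' : Type} (mul : G -> G -> G) (inv : G -> G) (one : G)
  (mul' : G' -> G' -> G') (inv' : G' -> G') (one' : G') (h : G -> G').
Hypotheses (L : group_laws mul inv one) (L' : group_laws mul' inv' one')
  (Hh : group_hom mul mul' h).

Lemma group_hom_one : h one = one'.
Proof.
  assert (E : mul' (h one) (h one) = h one) by (rewrite <- Hh, (g_lid _ _ _ L); reflexivity).
  rewrite <- (g_lid _ _ _ L' (h one)), <- (g_linv _ _ _ L' (h one)).
  rewrite (g_assoc _ _ _ L'), E. reflexivity.
Qed.

Lemma group_hom_inv x : h (inv x) = inv' (h x).
Proof.
  assert (E : mul' (h (inv x)) (h x) = one')
    by (rewrite <- Hh, (g_linv _ _ _ L); exact group_hom_one).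
  rewrite <- (g_rid _ _ _ L' (h (inv x))), <- (g_rinv _ _ _ L' (h x)).
  rewrite <- (g_assoc _ _ _ L'), E. apply (g_lid _ _ _ L').
Qed.

End GroupHom.

Section FundamentalGroup.
Context {X : Type} (OX : (X -> Prop) -> Prop) (x0 : X).

Definition loop_concat (a b : Omega OX x0) : Omega OX x0 :=
  exist _ (concat_fun (proj1_sig a) (proj1_sig b))
    (is_loop_concat OX x0 _ _ (proj2_sig a) (proj2_sig b)).

Definition loop_rev (a : Omega OX x0) : Omega OX x0 :=
  exist _ (fun t => proj1_sig a (revI t)) (is_loop_rev OX x0 _ (proj2_sig a)).

Lemma loop_continuous (a : Omega OX x0) : continuous I_open OX (proj1_sig a).
Proof. apply (proj2_sig a). Qed.

Lemma loop_start (a : Omega OX x0) (t : I) : proj1_sig t = 0 -> proj1_sig a t = x0.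
Proof. intros H. replace t with I0 by (apply I_eq; simpl; lra). apply (proj2_sig a). Qed.

Lemma loop_end (a : Omega OX x0) (t : I) : proj1_sig t = 1 -> proj1_sig a t = x0.
Proof. intros H. replace t with I1 by (apply I_eq; simpl; lra). apply (proj2_sig a). Qed.

Lemma pi1_eq (C D : pi1 OX x0) : proj1_sig C = proj1_sig D -> C = D.
Proof. destruct C as [C HC], D as [D HD]; simpl; intros ->. f_equal; apply proof_irrelevance. Qed.

Lemma Omega_eq (a b : Omega OX x0) : (forall t, proj1_sig a t = proj1_sig b t) -> a = b.
Proof.
  destruct a as [a Ha], b as [b Hb]; simpl; intros E.
  assert (a = b) by (apply functional_extensionality; auto). subst.
  f_equal; apply proof_irrelevance.
Qed.

Lemma cls_eq (a b : Omega OX x0) : homotopic OX x0 (proj1_sig a) (proj1_sig b) -> cls a = cls b.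
Proof.
  intros H. apply pi1_eq; simpl. apply pred_ext; intros c; split; intros Hc.
  - eapply homotopic_trans; [apply homotopic_sym, H|exact Hc].
  - eapply homotopic_trans; [exact H|exact Hc].
Qed.

Lemma cls_eq_inv (a b : Omega OX x0) :
  cls a = cls b -> homotopic OX x0 (proj1_sig a) (proj1_sig b).
Proof.
  intros E. assert (H : proj1_sig (cls b) b) by (simpl; apply homotopic_refl, (proj2_sig b)).
  rewrite <- E in H. exact H.
Qed.

Lemma cls_ext (a b : Omega OX x0) : (forall t, proj1_sig a t = proj1_sig b t) -> cls a = cls b.
Proof. intros E. rewrite (Omega_eq a b E). reflexivity. Qed.

Lemma pi1_mem (C : pi1 OX x0) (b : Omega OX x0) : proj1_sig C b -> C = cls b.
Proof.
  destruct C as [C [e He]]; simpl; intros Hb. apply pi1_eq; simpl.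
  apply pred_ext; intros v. rewrite He. apply He in Hb. split; intros Hv.
  - eapply homotopic_trans; [apply homotopic_sym, Hb|exact Hv].
  - eapply homotopic_trans; [exact Hb|exact Hv].
Qed.

Lemma pi1_surj (C : pi1 OX x0) : exists a, C = cls a.
Proof.
  destruct C as [C [e He]]. exists e. apply pi1_mem; simpl. apply He.
  apply homotopic_refl, (proj2_sig e).
Qed.

Lemma pi1_mul_cls (a b : Omega OX x0) : pi1_mul OX x0 (cls a) (cls b) = cls (loop_concat a b).
Proof.
  unfold pi1_mul.
  match goal with |- epsilon ?i ?P = _ => assert (Ex : exists E, P E);
    [|destruct (epsilon_spec i P Ex) as [a' [b' [c [Ha [Hb [Hc Hcat]]]]]]] end.
  - exists (cls (loop_concat a b)), a, b, (loop_concat a b). simpl.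
    repeat split; apply homotopic_refl;
      [apply (proj2_sig a)|apply (proj2_sig b)|apply (proj2_sig (loop_concat a b))].
  - rewrite (pi1_mem _ _ Hc). simpl in Ha, Hb.
    rewrite (cls_ext c (loop_concat a' b') Hcat).
    apply cls_eq; simpl. apply homotopic_concat; apply homotopic_sym; auto.
Qed.

Lemma pi1_inv_cls (a : Omega OX x0) : pi1_inv OX x0 (cls a) = cls (loop_rev a).
Proof.
  unfold pi1_inv.
  match goal with |- epsilon ?i ?P = _ => assert (Ex : exists E, P E);
    [|destruct (epsilon_spec i P Ex) as [a' [c [Ha [Hc Hrev]]]]] end.
  - exists (cls (loop_rev a)), a, (loop_rev a). simpl.
    repeat split; apply homotopic_refl; [apply (proj2_sig a)|apply (proj2_sig (loop_rev a))].
  - rewrite (pi1_mem _ _ Hc). simpl in Ha.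
    rewrite (cls_ext c (loop_rev a') Hrev).
    apply cls_eq; simpl. apply homotopic_rev; apply homotopic_sym; auto.
Qed.

Ltac solve_piecewise :=
  repeat match goal with |- context [Rle_dec ?x ?y] => destruct (Rle_dec x y) end;
  try (exfalso; nra); try reflexivity; try (f_equal; apply clampI_eq; nra).

Lemma concat_assoc_l_chain3 (a b c : I -> X) (t : I) :
  concat_fun (concat_fun a b) c t =
  chain3 a b c (Rmin (4 * proj1_sig t) (2 * proj1_sig t + 1)).
Proof.
  destruct t as [s Hs]. unfold concat_fun. cbv beta. cbn [proj1_sig].
  destruct (Rle_dec s (1/2)).
  - rewrite (clamp_val (2*s)) by nra. rewrite Rmin_left by nra. unfold chain3, chain2.
    solve_piecewise.
  - rewrite Rmin_right by nra. unfold chain3, chain2. solve_piecewise.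
Qed.

Lemma concat_assoc_r_chain3 (a b c : I -> X) (t : I) :
  concat_fun a (concat_fun b c) t =
  chain3 a b c (Rmax (2 * proj1_sig t) (4 * proj1_sig t - 1)).
Proof.
  destruct t as [s Hs]. unfold concat_fun. cbv beta. cbn [proj1_sig].
  destruct (Rle_dec s (1/2)).
  - rewrite Rmax_left by nra. unfold chain3, chain2. solve_piecewise.
  - rewrite (clamp_val (2*s-1)) by nra. rewrite Rmax_right by nra. unfold chain3, chain2.
    solve_piecewise.
Qed.

(* Each group law is witnessed by a homotopy [(s, t) |-> chain (g_t s)] that
   interpolates linearly between the two reparametrizations. *)
Lemma cls_assoc (a b c : Omega OX x0) :
  cls (loop_concat (loop_concat a b) c) = cls (loop_concat a (loop_concat b c)).
Proof.
  apply cls_eq; simpl.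
  exists (fun p : I * I => chain3 (proj1_sig a) (proj1_sig b) (proj1_sig c)
     ((1 - proj1_sig (snd p)) * Rmin (4 * proj1_sig (fst p)) (2 * proj1_sig (fst p) + 1)
      + proj1_sig (snd p) * Rmax (2 * proj1_sig (fst p)) (4 * proj1_sig (fst p) - 1))).
  split; [|split; [|split]].
  - apply continuous_chain_comp; [|real_cont_tac].
    apply chain3_continuous; try apply loop_continuous;
      rewrite loop_end, loop_start; reflexivity.
  - intros s. rewrite concat_assoc_l_chain3. f_equal. simpl; ring.
  - intros s. rewrite concat_assoc_r_chain3. f_equal. simpl; ring.
  - intros t; cbn [proj1_sig fst snd I0 I1]. split.
    + rewrite Rmin_left, Rmax_left by nra.
      unfold chain3. destruct (Rle_dec _ 1) as [?|?%Rnot_le_lt]; [|nra]. apply loop_start. rewrite clamp_val; nra.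
    + rewrite Rmin_right, Rmax_right by nra. unfold chain3, chain2.
      destruct (Rle_dec _ 1) as [?|?%Rnot_le_lt]; [nra|]. destruct (Rle_dec _ 1) as [?|?%Rnot_le_lt]; [nra|].
      apply loop_end. rewrite clamp_val; nra.
Qed.

Lemma cls_lid (a : Omega OX x0) : cls (loop_concat (const_loop OX x0) a) = cls a.
Proof.
  apply cls_eq; simpl.
  exists (fun p : I * I => chain2 (fun _ => x0) (proj1_sig a)
     ((1 - proj1_sig (snd p)) * (2 * proj1_sig (fst p)) + proj1_sig (snd p) * (1 + proj1_sig (fst p)))).
  split; [|split; [|split]].
  - apply continuous_chain_comp; [|real_cont_tac].
    apply chain2_continuous; try apply loop_continuous;
      [apply (proj2_sig (const_loop OX x0))|symmetry; apply loop_start; reflexivity].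
  - intros s. rewrite concat_fun_chain2. f_equal. simpl; ring.
  - intros [s Hs]. cbn [proj1_sig fst snd I0 I1]. unfold chain2. destruct (Rle_dec _ _) as [?|?%Rnot_le_lt].
    + symmetry; apply loop_start. cbn [proj1_sig]; nra.
    + f_equal. apply I_eq. rewrite clamp_val; cbn [proj1_sig]; nra.
  - intros [t Ht]; cbn [proj1_sig fst snd I0 I1]. unfold chain2. split.
    + destruct (Rle_dec _ _) as [?|?%Rnot_le_lt]; [reflexivity|nra].
    + destruct (Rle_dec _ _) as [?|?%Rnot_le_lt]; [nra|]. apply loop_end. rewrite clamp_val; nra.
Qed.

Lemma cls_rid (a : Omega OX x0) : cls (loop_concat a (const_loop OX x0)) = cls a.
Proof.
  apply cls_eq; simpl.
  exists (fun p : I * I => chain2 (proj1_sig a) (fun _ => x0)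
     ((1 - proj1_sig (snd p)) * (2 * proj1_sig (fst p)) + proj1_sig (snd p) * proj1_sig (fst p))).
  split; [|split; [|split]].
  - apply continuous_chain_comp; [|real_cont_tac].
    apply chain2_continuous; try apply loop_continuous;
      [apply (proj2_sig (const_loop OX x0))|apply loop_end; reflexivity].
  - intros s. rewrite concat_fun_chain2. f_equal. simpl; ring.
  - intros [s Hs]. cbn [proj1_sig fst snd I0 I1]. unfold chain2. destruct (Rle_dec _ _) as [?|?%Rnot_le_lt].
    + f_equal. apply I_eq. rewrite clamp_val; cbn [proj1_sig]; nra.
    + exfalso; nra.
  - intros [t Ht]; cbn [proj1_sig fst snd I0 I1]. unfold chain2. split.
    + destruct (Rle_dec _ _) as [?|?%Rnot_le_lt]; [|nra]. apply loop_start. rewrite clamp_val; nra.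
    + destruct (Rle_dec _ _) as [?|?%Rnot_le_lt]; [|reflexivity]. apply loop_end. rewrite clamp_val; nra.
Qed.

Lemma cls_rinv (a : Omega OX x0) : cls (loop_concat a (loop_rev a)) = cls (const_loop OX x0).
Proof.
  apply cls_eq; simpl.
  exists (fun p : I * I => proj1_sig a (clampI
     ((1 - proj1_sig (snd p)) * Rmin (2 * proj1_sig (fst p)) (2 - 2 * proj1_sig (fst p))))).
  split; [|split; [|split]].
  - apply continuous_II_iff. apply continuous_clamp_comp; [apply loop_continuous|real_cont_tac].
  - intros [s Hs]. unfold concat_fun; cbn [proj1_sig fst snd I0 I1].
    destruct (Rle_dec s (1/2)).
    + f_equal. apply clampI_eq. rewrite Rmin_left by nra. ring.
    + f_equal. apply I_eq. cbn [proj1_sig revI]. rewrite Rmin_right by nra.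
      rewrite !clamp_val by nra. ring.
  - intros s; cbn [proj1_sig fst snd I0 I1]. apply loop_start.
    rewrite clamp_val; nra.
  - intros t; cbn [proj1_sig fst snd I0 I1]. split; apply loop_start;
    [rewrite Rmin_left by nra|rewrite Rmin_right by nra]; rewrite clamp_val; nra.
Qed.

Lemma cls_linv (a : Omega OX x0) : cls (loop_concat (loop_rev a) a) = cls (const_loop OX x0).
Proof.
  apply cls_eq; simpl.
  exists (fun p : I * I => proj1_sig a (clampI
     (1 - (1 - proj1_sig (snd p)) * Rmin (2 * proj1_sig (fst p)) (2 - 2 * proj1_sig (fst p))))).
  split; [|split; [|split]].
  - apply continuous_II_iff. apply continuous_clamp_comp; [apply loop_continuous|real_cont_tac].
  - intros [s Hs]. unfold concat_fun; cbn [proj1_sig fst snd I0 I1].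
    destruct (Rle_dec s (1/2)).
    + f_equal. apply I_eq. cbn [proj1_sig revI]. rewrite Rmin_left by nra.
      rewrite !clamp_val by nra. ring.
    + f_equal. apply clampI_eq. rewrite Rmin_right by nra. ring.
  - intros s; cbn [proj1_sig fst snd I0 I1]. apply loop_end.
    rewrite clamp_val; nra.
  - intros t; cbn [proj1_sig fst snd I0 I1]. split; apply loop_end;
    [rewrite Rmin_left by nra|rewrite Rmin_right by nra]; rewrite clamp_val; nra.
Qed.

Lemma pi1_group_laws : group_laws (pi1_mul OX x0) (pi1_inv OX x0) (pi1_one OX x0).
Proof.
  unfold pi1_one. split.
  - intros A B C. destruct (pi1_surj A) as [a ->]. destruct (pi1_surj B) as [b ->].
    destruct (pi1_surj C) as [c ->]. rewrite !pi1_mul_cls. apply cls_assoc.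
  - intros A. destruct (pi1_surj A) as [a ->]. rewrite pi1_mul_cls. apply cls_lid.
  - intros A. destruct (pi1_surj A) as [a ->]. rewrite pi1_mul_cls. apply cls_rid.
  - intros A. destruct (pi1_surj A) as [a ->]. rewrite pi1_inv_cls, pi1_mul_cls. apply cls_linv.
  - intros A. destruct (pi1_surj A) as [a ->]. rewrite pi1_inv_cls, pi1_mul_cls. apply cls_rinv.
Qed.

End FundamentalGroup.

Section InducedMap.
Context {X X' : Type} (OX : (X -> Prop) -> Prop) (x0 : X)
  (OX' : (X' -> Prop) -> Prop) (x0' : X') (f : X -> X').
Hypotheses (Hf : continuous OX OX' f) (Hf0 : f x0 = x0').

Definition loop_comp (a : Omega OX x0) : Omega OX' x0' :=
  exist _ (fun t => f (proj1_sig a t)) (is_loop_comp OX x0 OX' x0' f _ Hf Hf0 (proj2_sig a)).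

Lemma pi1_map_cls (a : Omega OX x0) : pi1_map OX x0 OX' x0' f (cls a) = cls (loop_comp a).
Proof.
  unfold pi1_map.
  match goal with |- epsilon ?i ?P = _ => assert (Ex : exists E, P E);
    [|destruct (epsilon_spec i P Ex) as [a' [c [Ha [Hc Hcomp]]]]] end.
  - exists (cls (loop_comp a)), a, (loop_comp a). simpl.
    repeat split; apply homotopic_refl; [apply (proj2_sig a)|apply (proj2_sig (loop_comp a))].
  - rewrite (pi1_mem _ _ _ _ Hc). simpl in Ha.
    rewrite (cls_ext _ _ c (loop_comp a') Hcomp).
    apply cls_eq; simpl. apply (homotopic_comp OX x0); auto. apply homotopic_sym; auto.
Qed.

Lemma pi1_map_hom : group_hom (pi1_mul OX x0) (pi1_mul OX' x0') (pi1_map OX x0 OX' x0' f).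
Proof.
  intros A B. destruct (pi1_surj _ _ A) as [a ->]. destruct (pi1_surj _ _ B) as [b ->].
  rewrite pi1_mul_cls, !pi1_map_cls, pi1_mul_cls.
  apply cls_ext; intros t; simpl. unfold concat_fun. destruct (Rle_dec _ _) as [?|?%Rnot_le_lt]; reflexivity.
Qed.

Lemma pi1_qtop_map_continuous :
  continuous (pi1_qtop_open OX x0) (pi1_qtop_open OX' x0') (pi1_map OX x0 OX' x0' f).
Proof.
  intros V HV. unfold pi1_qtop_open in *.
  assert (E : (fun a => V (pi1_map OX x0 OX' x0' f (cls a))) =
              (fun a => V (cls (loop_comp a)))).
  { apply pred_ext; intros a. rewrite pi1_map_cls. tauto. }
  rewrite E. unfold Omega_open in *.
  eapply (generated_preimage _ _ loop_comp (fun b => V (cls b))); [|exact HV].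
  intros W [K [U [HK [HU EW]]]]. exists K, (fun x => U (f x)).
  split; [exact HK|split; [apply Hf; exact HU|]].
  intros a. rewrite EW. simpl. tauto.
Qed.

End InducedMap.

(** * Free groups and word evaluation *)

Definition word_map {S S' : Type} (h : S -> S') (w : word S) : word S' :=
  map (fun p => (fst p, h (snd p))) w.

Definition FG_map {S S' : Type} (h : S -> S') (C : FG S) : FG S' := fcls (word_map h (frep C)).

Section FreeGroup.
Context {S : Type}.

Lemma fequiv_refl (w : word S) : fequiv S w w.
Proof. apply rst_refl. Qed.

Lemma fequiv_sym (w v : word S) : fequiv S w v -> fequiv S v w.
Proof. apply rst_sym. Qed.

Lemma fequiv_trans (u w v : word S) : fequiv S u w -> fequiv S w v -> fequiv S u v.
Proof. apply rst_trans. Qed.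

Lemma fequiv_lift {S' : Type} (g : word S -> word S') :
  (forall u v, fstep S u v -> fequiv S' (g u) (g v)) ->
  forall u v, fequiv S u v -> fequiv S' (g u) (g v).
Proof.
  intros Hg u v H. induction H.
  - apply Hg; auto.
  - apply rst_refl.
  - apply rst_sym; auto.
  - eapply rst_trans; eauto.
Qed.

Lemma fequiv_app_l (u v w : word S) : fequiv S v w -> fequiv S (u ++ v) (u ++ w).
Proof.
  apply (fequiv_lift (fun v => u ++ v)). intros v' w' [w1 [w2 [b [s [-> ->]]]]].
  apply rst_step. exists (u ++ w1), w2, b, s. rewrite !app_assoc. auto.
Qed.

Lemma fequiv_app_r (u v w : word S) : fequiv S v w -> fequiv S (v ++ u) (w ++ u).
Proof.
  apply (fequiv_lift (fun v => v ++ u)). intros v' w' [w1 [w2 [b [s [-> ->]]]]].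
  apply rst_step. exists w1, (w2 ++ u), b, s. rewrite <- !app_assoc. auto.
Qed.

Lemma fequiv_app (u u' v v' : word S) :
  fequiv S u u' -> fequiv S v v' -> fequiv S (u ++ v) (u' ++ v').
Proof. intros H1 H2. eapply fequiv_trans; [apply fequiv_app_r; eauto|apply fequiv_app_l; auto]. Qed.

Lemma fequiv_map {S' : Type} (h : S -> S') (v w : word S) :
  fequiv S v w -> fequiv S' (word_map h v) (word_map h w).
Proof.
  apply (fequiv_lift (word_map h)). intros v' w' [w1 [w2 [b [s [-> ->]]]]].
  apply rst_step. exists (word_map h w1), (word_map h w2), b, (h s). unfold word_map.
  rewrite !map_app. auto.
Qed.

Lemma word_inv_app (u v : word S) : word_inv (u ++ v) = word_inv v ++ word_inv u.
Proof. unfold word_inv. rewrite map_app, rev_app_distr. auto. Qed.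

Lemma word_inv_cons (x : bool * S) (v : word S) :
  word_inv (x :: v) = word_inv v ++ (negb (fst x), snd x) :: nil.
Proof. reflexivity. Qed.

Lemma fequiv_inv (v w : word S) : fequiv S v w -> fequiv S (word_inv v) (word_inv w).
Proof.
  apply (fequiv_lift word_inv). intros v' w' [w1 [w2 [b [s [-> ->]]]]].
  apply rst_step. exists (word_inv w2), (word_inv w1), b, s.
  rewrite !word_inv_app, !word_inv_cons. simpl. rewrite Bool.negb_involutive.
  rewrite <- !app_assoc. simpl. auto.
Qed.

Lemma word_mul_inv_r (w : word S) : fequiv S (w ++ word_inv w) nil.
Proof.
  induction w as [|x w IH]; [apply fequiv_refl|].
  rewrite word_inv_cons. simpl. rewrite app_assoc.
  eapply fequiv_trans; [apply (fequiv_app_l (x :: nil)); apply fequiv_app_r, IH|].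
  simpl. destruct x as [b s]. apply rst_step. exists nil, nil, b, s. auto.
Qed.

Lemma word_mul_inv_l (w : word S) : fequiv S (word_inv w ++ w) nil.
Proof.
  induction w as [|x w IH]; [apply fequiv_refl|].
  rewrite word_inv_cons, <- app_assoc. simpl.
  eapply fequiv_trans; [|apply IH]. apply fequiv_app_l.
  destruct x as [b s]. simpl. apply rst_step. exists nil, w, (negb b), s.
  rewrite Bool.negb_involutive. auto.
Qed.

Lemma fcls_eq (w v : word S) : fequiv S w v -> fcls w = fcls v.
Proof.
  intros H. unfold fcls. assert (E : (fun u => fequiv S w u) = (fun u => fequiv S v u)).
  { apply pred_ext; intros u; split; intros Hu; eapply fequiv_trans; eauto.
    apply fequiv_sym; auto. }
  apply eq_sig_hprop; [intros; apply proof_irrelevance|]. simpl. exact E.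
Qed.

Lemma frep_fcls (w : word S) : fequiv S w (frep (fcls w)).
Proof.
  unfold frep. destruct (constructive_indefinite_description _ _) as [v Hv]. simpl.
  apply fequiv_sym. apply Hv. apply fequiv_refl.
Qed.

Lemma FG_surj (C : FG S) : exists w, C = fcls w.
Proof.
  exists (frep C). unfold frep. destruct (constructive_indefinite_description _ _) as [w Hw].
  simpl. apply eq_sig_hprop; [intros; apply proof_irrelevance|]. simpl.
  apply pred_ext; intros v. rewrite Hw. tauto.
Qed.

Lemma fmul_fcls (u v : word S) : fmul (fcls u) (fcls v) = fcls (u ++ v).
Proof. unfold fmul. apply fcls_eq. apply fequiv_sym, fequiv_app; apply frep_fcls. Qed.

Lemma finv_fcls (u : word S) : finv (fcls u) = fcls (word_inv u).
Proof. unfold finv. apply fcls_eq. apply fequiv_inv, fequiv_sym, frep_fcls. Qed.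

Lemma fmul_finv_cancel (E C : FG S) : fmul E (fmul (finv E) C) = C.
Proof.
  destruct (FG_surj C) as [c ->]. destruct (FG_surj E) as [e ->].
  rewrite finv_fcls, !fmul_fcls. apply fcls_eq. rewrite app_assoc.
  apply (fequiv_app_r c (e ++ word_inv e) nil). apply word_mul_inv_r.
Qed.

End FreeGroup.

Lemma FG_map_fcls {S S' : Type} (h : S -> S') (w : word S) :
  FG_map h (fcls w) = fcls (word_map h w).
Proof. unfold FG_map. apply fcls_eq. apply fequiv_map, fequiv_sym, frep_fcls. Qed.

Lemma FG_map_mul {S S' : Type} (h : S -> S') (C D : FG S) :
  FG_map h (fmul C D) = fmul (FG_map h C) (FG_map h D).
Proof.
  destruct (FG_surj C) as [u ->]. destruct (FG_surj D) as [v ->].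
  rewrite fmul_fcls, !FG_map_fcls, fmul_fcls. unfold word_map; rewrite map_app; auto.
Qed.

Lemma FG_map_inv {S S' : Type} (h : S -> S') (C : FG S) : FG_map h (finv C) = finv (FG_map h C).
Proof.
  destruct (FG_surj C) as [u ->]. rewrite finv_fcls, !FG_map_fcls, finv_fcls. f_equal.
  unfold word_map, word_inv. rewrite map_rev, !map_map. auto.
Qed.

Lemma FG_map_gen {S S' : Type} (h : S -> S') (x : S) : FG_map h (fgen x) = fgen (h x).
Proof. unfold fgen. rewrite FG_map_fcls. reflexivity. Qed.

Section Evaluation.
Context {G : Type} (mul : G -> G -> G) (inv : G -> G) (one : G).
Hypothesis L : group_laws mul inv one.

Lemma word_eval_app (u v : word G) :
  word_eval mul inv one (u ++ v) = mul (word_eval mul inv one u) (word_eval mul inv one v).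
Proof.
  induction u as [|x u IH]; simpl.
  - rewrite (g_lid _ _ _ L); auto.
  - rewrite IH, (g_assoc _ _ _ L); auto.
Qed.

Lemma word_eval_fequiv (w v : word G) :
  fequiv G w v -> word_eval mul inv one w = word_eval mul inv one v.
Proof.
  intros H. induction H as [u v [w1 [w2 [b [s [-> ->]]]]]| | |]; auto; [|congruence].
  rewrite !word_eval_app. f_equal. simpl.
  destruct b; simpl; rewrite <- (g_assoc _ _ _ L);
    [rewrite (g_rinv _ _ _ L)|rewrite (g_linv _ _ _ L)]; apply (g_lid _ _ _ L).
Qed.

Lemma mG_fcls (w : word G) : mG mul inv one (fcls w) = word_eval mul inv one w.
Proof. unfold mG. apply word_eval_fequiv, fequiv_sym, frep_fcls. Qed.

Lemma mG_fmul (C D : FG G) :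
  mG mul inv one (fmul C D) = mul (mG mul inv one C) (mG mul inv one D).
Proof.
  destruct (FG_surj C) as [u ->]. destruct (FG_surj D) as [v ->].
  rewrite fmul_fcls, !mG_fcls. apply word_eval_app.
Qed.

Lemma mG_fgen (x : G) : mG mul inv one (fgen x) = x.
Proof. unfold fgen. rewrite mG_fcls. simpl. apply (g_rid _ _ _ L). Qed.

Lemma mG_finv_mul (E C : FG G) :
  mG mul inv one E = mG mul inv one C -> mG mul inv one (fmul (finv E) C) = one.
Proof.
  intros H. destruct (FG_surj C) as [c ->]. destruct (FG_surj E) as [e ->].
  rewrite finv_fcls, fmul_fcls, mG_fcls, word_eval_app. rewrite !mG_fcls in H. rewrite <- H.
  rewrite <- word_eval_app. apply (word_eval_fequiv _ nil), word_mul_inv_l.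
Qed.

End Evaluation.

Lemma mG_FG_map {G G' : Type} (mul : G -> G -> G) (inv : G -> G) (one : G)
  (mul' : G' -> G' -> G') (inv' : G' -> G') (one' : G') (h : G -> G') :
  group_laws mul inv one -> group_laws mul' inv' one' -> group_hom mul mul' h ->
  forall C, mG mul' inv' one' (FG_map h C) = h (mG mul inv one C).
Proof.
  intros L L' Hh C. destruct (FG_surj C) as [u ->].
  rewrite FG_map_fcls, (mG_fcls _ _ _ L), (mG_fcls _ _ _ L').
  induction u as [|[b s] u IH]; simpl.
  - symmetry; apply (group_hom_one mul inv one mul' inv' one' h L L' Hh).
  - rewrite IH, Hh. destruct b; simpl; auto.
    rewrite (group_hom_inv mul inv one mul' inv' one' h L L' Hh); auto.
Qed.

(** * The free topological group and the tau-topology *)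

Definition FM_subbasis {S : Type} (OS : (S -> Prop) -> Prop) (V : FG S -> Prop) : Prop :=
  exists T, is_group_topology T /\ continuous OS T (@fgen S) /\ T V.

Section FreeTopologicalGroup.
Context {S : Type} (OS : (S -> Prop) -> Prop).

(* Multiplication is continuous for each group topology of the subbasis, hence
   at every product of finitely many subbasic neighbourhoods. *)
Lemma FM_mul_box (p : FG S * FG S) (l : list (FG S -> Prop)) :
  (forall V, In V l -> FM_subbasis OS V) -> (forall V, In V l -> V (fmul (fst p) (snd p))) ->
  exists A B, FM_open OS A /\ FM_open OS B /\ A (fst p) /\ B (snd p) /\
    forall q, A (fst q) -> B (snd q) -> forall V, In V l -> V (fmul (fst q) (snd q)).
Proof.
  induction l as [|V l IH]; intros H1 H2.
  - exists (fun _ => True), (fun _ => True). repeat split; try apply generated_full.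
    intros q _ _ V [].
  - destruct IH as [A [B [HA [HB [Ap [Bp HAB]]]]]].
    { intros; apply H1; right; auto. }
    { intros; apply H2; right; auto. }
    destruct (H1 V (or_introl eq_refl)) as [T [HTg [HTf TV]]].
    pose proof HTg as [_ [Tm _]].
    destruct (Tm _ TV p (H2 V (or_introl eq_refl)))
      as [A1 [B1 [HA1 [HB1 [A1p [B1p H1AB]]]]]].
    exists (fun x => A x /\ A1 x), (fun x => B x /\ B1 x). repeat split; auto.
    + apply generated_inter; auto. apply generated_sub. exists T; auto.
    + apply generated_inter; auto. apply generated_sub. exists T; auto.
    + intros q [Aq A1q] [Bq B1q] W [<-|HW].
      * apply H1AB; auto.
      * apply HAB; auto.
Qed.

Lemma FM_mul_continuous :
  continuous (prod_open (FM_open OS) (FM_open OS)) (FM_open OS) (fun p => fmul (fst p) (snd p)).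
Proof.
  intros V HV p Hp. destruct (HV _ Hp) as [l [l1 [l2 l3]]].
  destruct (FM_mul_box p l l1 l2) as [A [B [HA [HB [Ap [Bp H]]]]]].
  exists A, B. repeat split; auto. intros q Aq Bq. apply l3. apply H; auto.
Qed.

Lemma FM_mul_r_continuous (K : FG S) :
  continuous (FM_open OS) (FM_open OS) (fun E => fmul E K).
Proof.
  intros V HV. apply generated_local. intros E HE.
  destruct (FM_mul_continuous V HV (E, K) HE) as [A [B [HA [HB [Ap [Bp H]]]]]].
  exists A; repeat split; auto. intros y Ay. apply (H (y, K)); auto.
Qed.

End FreeTopologicalGroup.

Definition pullback_topology {Z Z' : Type} (T' : (Z' -> Prop) -> Prop) (m : Z -> Z')
  (W : Z -> Prop) : Prop :=
  exists V, T' V /\ forall x, W x <-> V (m x).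

Lemma pullback_is_topology {Z Z' : Type} (T' : (Z' -> Prop) -> Prop) (m : Z -> Z') :
  is_topology T' -> is_topology (pullback_topology T' m).
Proof.
  intros [H1 [H2 [H3 H4]]]. split; [|split; [|split]].
  - exists (fun _ => True); split; auto; tauto.
  - exists (fun _ => False); split; auto; tauto.
  - intros U V [U' [HU' EU]] [V' [HV' EV]]. exists (fun y => U' y /\ V' y). split; auto.
    intros x. rewrite EU, EV. tauto.
  - intros F HF.
    exists (fun y => exists V, (exists W, F W /\ T' V /\ forall x, W x <-> V (m x)) /\ V y).
    split.
    + apply H4. intros V [W [_ [HV _]]]; auto.
    + intros x; split.
      * intros [W [FW Wx]]. destruct (HF W FW) as [V [HV EV]].
        exists V; split; [exists W; auto|]. apply EV; auto.
      * intros [V [[W [FW [_ EV]]] Vx]]. exists W; split; auto. apply EV; auto.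
Qed.

(* A group topology on [F(S')] pulls back along [FG_map h] to a group topology on
   [F(S)] for which the generators are continuous; so [FG_map h] is continuous
   for the finest such topologies. *)
Lemma pullback_group_topology {S S' : Type} (OS : (S -> Prop) -> Prop)
  (OS' : (S' -> Prop) -> Prop) (h : S -> S') (T' : (FG S' -> Prop) -> Prop) :
  continuous OS OS' h -> is_group_topology T' -> continuous OS' T' (@fgen S') ->
  is_group_topology (pullback_topology T' (FG_map h)) /\
  continuous OS (pullback_topology T' (FG_map h)) (@fgen S).
Proof.
  intros Hh [Ttop [Tm Ti]] Tg. split; [split; [|split]|].
  - apply pullback_is_topology; auto.
  - intros W [V [HV EV]] q Hq. apply EV in Hq. rewrite FG_map_mul in Hq.
    destruct (Tm _ HV (FG_map h (fst q), FG_map h (snd q)) Hq)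
      as [A [B [HA [HB [Aq [Bq H]]]]]].
    exists (fun x => A (FG_map h x)), (fun x => B (FG_map h x)). repeat split; auto.
    + exists A; split; auto; tauto.
    + exists B; split; auto; tauto.
    + intros r Ar Br. apply EV. rewrite FG_map_mul.
      apply (H (FG_map h (fst r), FG_map h (snd r))); auto.
  - intros W [V [HV EV]]. exists (fun D => V (finv D)). split; [apply Ti; auto|].
    intros x. rewrite EV, FG_map_inv. tauto.
  - intros W [V [HV EV]].
    assert (E : (fun x => W (fgen x)) = (fun x => V (fgen (h x)))).
    { apply pred_ext; intros x. rewrite EV, FG_map_gen. tauto. }
    rewrite E. apply (Hh (fun y => V (fgen y))). apply Tg; auto.
Qed.

Lemma FG_map_continuous {S S' : Type} (OS : (S -> Prop) -> Prop) (OS' : (S' -> Prop) -> Prop)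
  (h : S -> S') : continuous OS OS' h -> continuous (FM_open OS) (FM_open OS') (FG_map h).
Proof.
  intros Hh V HV. apply (generated_preimage (FM_subbasis OS) (FM_subbasis OS')); auto.
  intros W [T' [HT' [Tg TW]]]. destruct (pullback_group_topology OS OS' h T' Hh HT' Tg) as [G1 G2].
  exists (pullback_topology T' (FG_map h)). split; [exact G1|split; [exact G2|]].
  exists W; split; [exact TW|intros x; tauto].
Qed.

Section Tau.
Context {G : Type} (OG : (G -> Prop) -> Prop) (mul : G -> G -> G) (inv : G -> G) (one : G).
Hypothesis L : group_laws mul inv one.

Lemma tau_is_topology : is_topology (tau_open OG mul inv one).
Proof. apply (preimage_is_topology (FM_open OG) (mG mul inv one)), generated_is_topology. Qed.

(* Around a point [m_G E] of the image of [A], with [m_G E = m_G C] and [C] in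
   [A], the translate [A * K^-1] by [K = E^-1 C], an element of the kernel of
   [m_G], is an open neighbourhood of [E] with the same image inside that of [A]. *)
Lemma mG_open_map (A : FG G -> Prop) :
  FM_open OG A -> tau_open OG mul inv one (fun x => exists C, A C /\ mG mul inv one C = x).
Proof.
  intros HA. unfold tau_open. apply generated_local. intros E [C [AC EC]].
  set (K := fmul (finv E) C).
  exists (fun E' => A (fmul E' K)). repeat split.
  - apply (FM_mul_r_continuous OG K A HA).
  - unfold K. rewrite fmul_finv_cancel; auto.
  - intros E' HE'. exists (fmul E' K); split; auto.
    rewrite (mG_fmul _ _ _ L). unfold K. rewrite (mG_finv_mul _ _ _ L) by auto.
    apply (g_rid _ _ _ L).
Qed.

End Tau.

Section TauFunctoriality.
Context {G G' : Type} (OG : (G -> Prop) -> Prop) (mul : G -> G -> G) (inv : G -> G) (one : G)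
  (OG' : (G' -> Prop) -> Prop) (mul' : G' -> G' -> G') (inv' : G' -> G') (one' : G').
Hypotheses (L : group_laws mul inv one) (L' : group_laws mul' inv' one').

Lemma tau_map_continuous (h : G -> G') :
  group_hom mul mul' h -> continuous OG OG' h ->
  continuous (tau_open OG mul inv one) (tau_open OG' mul' inv' one') h.
Proof.
  intros Hh Hc V HV. unfold tau_open in *.
  replace (fun C => V (h (mG mul inv one C)))
    with (fun C => V (mG mul' inv' one' (FG_map h C))).
  - apply (FG_map_continuous OG OG' h Hc (fun D => V (mG mul' inv' one' D))); auto.
  - apply pred_ext; intros C. rewrite (mG_FG_map mul inv one mul' inv' one' h); auto. tauto.
Qed.

(* The product [j1 x * j2 y] lifts to the continuous product of free
   generators, and [m_G] is open on each factor. *)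
Lemma tau_mul_hom_continuous {G1 G2 : Type}
  (O1 : (G1 -> Prop) -> Prop) (mul1 : G1 -> G1 -> G1) (inv1 : G1 -> G1) (one1 : G1)
  (O2 : (G2 -> Prop) -> Prop) (mul2 : G2 -> G2 -> G2) (inv2 : G2 -> G2) (one2 : G2)
  (j1 : G1 -> G') (j2 : G2 -> G') :
  group_laws mul1 inv1 one1 -> group_laws mul2 inv2 one2 ->
  group_hom mul1 mul' j1 -> group_hom mul2 mul' j2 ->
  continuous O1 OG' j1 -> continuous O2 OG' j2 ->
  continuous (prod_open (tau_open O1 mul1 inv1 one1) (tau_open O2 mul2 inv2 one2))
    (tau_open OG' mul' inv' one') (fun p => mul' (j1 (fst p)) (j2 (snd p))).
Proof.
  intros L1 L2 Hj1 Hj2 Cj1 Cj2 U HU p Up.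
  set (m' := mG mul' inv' one'). set (m1 := mG mul1 inv1 one1). set (m2 := mG mul2 inv2 one2).
  assert (Hm : forall C D, m' (fmul (FG_map j1 C) (FG_map j2 D)) = mul' (j1 (m1 C)) (j2 (m2 D))).
  { intros C D. unfold m'. rewrite (mG_fmul _ _ _ L').
    rewrite !(mG_FG_map _ _ _ _ _ _ j1 L1 L' Hj1), !(mG_FG_map _ _ _ _ _ _ j2 L2 L' Hj2).
    reflexivity. }
  assert (Hlift : continuous (prod_open (FM_open O1) (FM_open O2)) (FM_open OG')
                    (fun q => fmul (FG_map j1 (fst q)) (FG_map j2 (snd q)))).
  { apply (continuous_comp _ (prod_open (FM_open OG') (FM_open OG'))
             _ (fun q => (FG_map j1 (fst q), FG_map j2 (snd q))) (fun r => fmul (fst r) (snd r))).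
    - apply continuous_prod_map; apply FG_map_continuous; auto.
    - apply FM_mul_continuous. }
  destruct (Hlift _ HU (fgen (fst p), fgen (snd p))) as [A [B [HA [HB [Ap [Bp HAB]]]]]].
  { simpl. fold m'. rewrite Hm. unfold m1, m2. rewrite !mG_fgen by auto. exact Up. }
  exists (fun x => exists C, A C /\ m1 C = x), (fun y => exists D, B D /\ m2 D = y).
  split; [apply mG_open_map; auto|].
  split; [apply mG_open_map; auto|].
  split; [exists (fgen (fst p)); split; auto; apply mG_fgen; auto|].
  split; [exists (fgen (snd p)); split; auto; apply mG_fgen; auto|].
  intros q [C [AC <-]] [D [BD <-]]. pose proof (HAB (C, D) AC BD) as HU'.
  simpl in HU'. fold m' in HU'. rewrite Hm in HU'. exact HU'.
Qed.

End TauFunctoriality.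

(** * The fundamental group of a product *)

Section Product.
Context {X Y : Type} (OX : (X -> Prop) -> Prop) (x0 : X) (OY : (Y -> Prop) -> Prop) (y0 : Y).
Hypotheses (TX : is_topology OX) (TY : is_topology OY).

Local Notation OZ := (prod_open OX OY).
Local Notation z0 := (x0, y0).

Lemma prod_fst_continuous : continuous OZ OX (@fst X Y).
Proof. apply continuous_fst, TY. Qed.

Lemma prod_snd_continuous : continuous OZ OY (@snd X Y).
Proof. apply continuous_snd, TX. Qed.

Lemma prod_inl_continuous : continuous OX OZ (fun x => (x, y0)).
Proof. apply continuous_pair; [exact TX|intros V HV; exact HV|apply continuous_const, TX]. Qed.

Lemma prod_inr_continuous : continuous OY OZ (fun y => (x0, y)).
Proof. apply continuous_pair; [exact TY|apply continuous_const, TY|intros V HV; exact HV]. Qed.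

Lemma phi_cls (c : Omega OZ z0) :
  phi OX x0 OY y0 (cls c) =
  (cls (loop_comp OZ z0 OX x0 fst prod_fst_continuous eq_refl c),
   cls (loop_comp OZ z0 OY y0 snd prod_snd_continuous eq_refl c)).
Proof.
  unfold phi. rewrite (pi1_map_cls OZ z0 OX x0 fst prod_fst_continuous eq_refl).
  rewrite (pi1_map_cls OZ z0 OY y0 snd prod_snd_continuous eq_refl). reflexivity.
Qed.

Lemma phi_inj (c1 c2 : pi1 OZ z0) : phi OX x0 OY y0 c1 = phi OX x0 OY y0 c2 -> c1 = c2.
Proof.
  destruct (pi1_surj _ _ c1) as [g1 ->]. destruct (pi1_surj _ _ c2) as [g2 ->].
  rewrite !phi_cls. intros E.
  pose proof (f_equal fst E) as E1. pose proof (f_equal snd E) as E2. simpl in E1, E2.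
  apply cls_eq_inv in E1. apply cls_eq_inv in E2. apply cls_eq.
  pose proof (homotopic_pair OX x0 OY y0 _ _ _ _ E1 E2) as H. simpl in H.
  assert (F : forall g : Omega OZ z0,
            (fun t => (fst (proj1_sig g t), snd (proj1_sig g t))) = proj1_sig g).
  { intros g. apply functional_extensionality; intros t. destruct (proj1_sig g t); auto. }
  rewrite !F in H. exact H.
Qed.

Definition phi_inv (p : pi1 OX x0 * pi1 OY y0) : pi1 OZ z0 :=
  pi1_mul OZ z0 (pi1_map OX x0 OZ z0 (fun x => (x, y0)) (fst p))
                (pi1_map OY y0 OZ z0 (fun y => (x0, y)) (snd p)).

Lemma phi_phi_inv (p : pi1 OX x0 * pi1 OY y0) : phi OX x0 OY y0 (phi_inv p) = p.
Proof.
  destruct p as [A B]. destruct (pi1_surj _ _ A) as [a ->]. destruct (pi1_surj _ _ B) as [b ->].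
  unfold phi_inv; simpl. rewrite (pi1_map_cls OX x0 OZ z0 _ prod_inl_continuous eq_refl).
  rewrite (pi1_map_cls OY y0 OZ z0 _ prod_inr_continuous eq_refl), pi1_mul_cls, phi_cls.
  rewrite <- (g_rid _ _ _ (pi1_group_laws OX x0) (cls a)).
  rewrite <- (g_lid _ _ _ (pi1_group_laws OY y0) (cls b)).
  unfold pi1_one. rewrite !pi1_mul_cls.
  f_equal; apply cls_ext; intros t; simpl; unfold concat_fun; destruct (Rle_dec _ _); reflexivity.
Qed.

Lemma phi_inv_phi (c : pi1 OZ z0) : phi_inv (phi OX x0 OY y0 c) = c.
Proof. apply phi_inj. apply phi_phi_inv. Qed.

Lemma phi_mul (a b : pi1 OZ z0) :
  phi OX x0 OY y0 (pi1_mul OZ z0 a b) =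
  (pi1_mul OX x0 (fst (phi OX x0 OY y0 a)) (fst (phi OX x0 OY y0 b)),
   pi1_mul OY y0 (snd (phi OX x0 OY y0 a)) (snd (phi OX x0 OY y0 b))).
Proof.
  unfold phi; simpl.
  rewrite (pi1_map_hom OZ z0 OX x0 fst prod_fst_continuous eq_refl).
  rewrite (pi1_map_hom OZ z0 OY y0 snd prod_snd_continuous eq_refl). reflexivity.
Qed.

Lemma pi1_tau_map_continuous {W W' : Type} (OW : (W -> Prop) -> Prop) (w0 : W)
  (OW' : (W' -> Prop) -> Prop) (w0' : W') (f : W -> W') :
  continuous OW OW' f -> f w0 = w0' ->
  continuous (pi1_tau_open OW w0) (pi1_tau_open OW' w0') (pi1_map OW w0 OW' w0' f).
Proof.
  intros Hf Hf0. apply tau_map_continuous; try apply pi1_group_laws.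
  - apply pi1_map_hom; auto.
  - apply pi1_qtop_map_continuous; auto.
Qed.

Lemma phi_continuous :
  continuous (pi1_tau_open OZ z0) (prod_open (pi1_tau_open OX x0) (pi1_tau_open OY y0))
    (phi OX x0 OY y0).
Proof.
  apply continuous_pair.
  - apply tau_is_topology.
  - apply pi1_tau_map_continuous; [apply prod_fst_continuous|reflexivity].
  - apply pi1_tau_map_continuous; [apply prod_snd_continuous|reflexivity].
Qed.

Lemma phi_inv_continuous :
  continuous (prod_open (pi1_tau_open OX x0) (pi1_tau_open OY y0)) (pi1_tau_open OZ z0) phi_inv.
Proof.
  apply tau_mul_hom_continuous; try apply pi1_group_laws.
  - apply pi1_map_hom; [apply prod_inl_continuous|reflexivity].
  - apply pi1_map_hom; [apply prod_inr_continuous|reflexivity].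
  - apply pi1_qtop_map_continuous; [apply prod_inl_continuous|reflexivity].
  - apply pi1_qtop_map_continuous; [apply prod_inr_continuous|reflexivity].
Qed.

End Product.

Lemma phi_natural {X Y X' Y' : Type} (OX : (X -> Prop) -> Prop) (x0 : X)
  (OY : (Y -> Prop) -> Prop) (y0 : Y) (OX' : (X' -> Prop) -> Prop) (x0' : X')
  (OY' : (Y' -> Prop) -> Prop) (y0' : Y') (f : X -> X') (g : Y -> Y') :
  is_topology OX -> is_topology OY -> is_topology OX' -> is_topology OY' ->
  continuous OX OX' f -> f x0 = x0' -> continuous OY OY' g -> g y0 = y0' ->
  forall c : pi1 (prod_open OX OY) (x0, y0),
    phi OX' x0' OY' y0'
      (pi1_map (prod_open OX OY) (x0, y0) (prod_open OX' OY') (x0', y0')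
               (fun p => (f (fst p), g (snd p))) c) =
    (pi1_map OX x0 OX' x0' f (fst (phi OX x0 OY y0 c)),
     pi1_map OY y0 OY' y0' g (snd (phi OX x0 OY y0 c))).
Proof.
  intros TX TY TX' TY' Hf Hf0 Hg Hg0 c. destruct (pi1_surj _ _ c) as [a ->].
  assert (Hfg0 : (f x0, g y0) = (x0', y0')) by (rewrite Hf0, Hg0; reflexivity).
  rewrite (pi1_map_cls (prod_open OX OY) (x0, y0) _ _ _
             (continuous_prod_map OX OX' OY OY' f g Hf Hg) Hfg0).
  rewrite (phi_cls OX' x0' OY' y0' TX' TY'), (phi_cls OX x0 OY y0 TX TY). simpl.
  rewrite (pi1_map_cls _ _ _ _ f Hf Hf0), (pi1_map_cls _ _ _ _ g Hg Hg0).
  f_equal; apply cls_ext; intros t; reflexivity.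
Qed.

Theorem proposition3p18 :
  forall (X : Type) (OX : (X -> Prop) -> Prop) (x0 : X)
         (Y : Type) (OY : (Y -> Prop) -> Prop) (y0 : Y),
  is_topology OX -> is_topology OY ->
  (* group homomorphism *)
  (forall a b : pi1 (prod_open OX OY) (x0, y0),
     phi OX x0 OY y0 (pi1_mul (prod_open OX OY) (x0, y0) a b) =
     (pi1_mul OX x0 (fst (phi OX x0 OY y0 a)) (fst (phi OX x0 OY y0 b)),
      pi1_mul OY y0 (snd (phi OX x0 OY y0 a)) (snd (phi OX x0 OY y0 b)))) /\
  (* bijective *)
  (forall p : pi1 OX x0 * pi1 OY y0, exists! c, phi OX x0 OY y0 c = p) /\
  (* continuous *)
  continuous (pi1_tau_open (prod_open OX OY) (x0, y0))
             (prod_open (pi1_tau_open OX x0) (pi1_tau_open OY y0))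
             (phi OX x0 OY y0) /\
  (* open, hence a homeomorphism *)
  (forall U, pi1_tau_open (prod_open OX OY) (x0, y0) U ->
     prod_open (pi1_tau_open OX x0) (pi1_tau_open OY y0)
               (fun p => exists c, U c /\ phi OX x0 OY y0 c = p)) /\
  (* naturality in based maps *)
  (forall (X' : Type) (OX' : (X' -> Prop) -> Prop) (x0' : X')
          (Y' : Type) (OY' : (Y' -> Prop) -> Prop) (y0' : Y')
          (f : X -> X') (g : Y -> Y'),
     is_topology OX' -> is_topology OY' ->
     continuous OX OX' f -> f x0 = x0' ->
     continuous OY OY' g -> g y0 = y0' ->
     forall c : pi1 (prod_open OX OY) (x0, y0),
       phi OX' x0' OY' y0'
         (pi1_map (prod_open OX OY) (x0, y0) (prod_open OX' OY') (x0', y0')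
                  (fun p => (f (fst p), g (snd p))) c) =
       (pi1_map OX x0 OX' x0' f (fst (phi OX x0 OY y0 c)),
        pi1_map OY y0 OY' y0' g (snd (phi OX x0 OY y0 c)))).
Proof.
  intros X OX x0 Y OY y0 TX TY.
  split; [|split; [|split; [|split]]].
  - apply phi_mul; auto.
  - intros p. exists (phi_inv OX x0 OY y0 p). split.
    + apply phi_phi_inv; auto.
    + intros c <-. apply phi_inv_phi; auto.
  - apply phi_continuous; auto.
  - apply open_map_of_continuous_inverse with (g := phi_inv OX x0 OY y0).
    + apply phi_inv_continuous; auto.
    + apply phi_inv_phi; auto.
    + apply phi_phi_inv; auto.
  - intros X' OX' x0' Y' OY' y0' f g TX' TY'. apply phi_natural; auto.
Qed.
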